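(* Let $\lambda_1\in\mathrm{Dyck}(2n_1)$, $\lambda_2\in\mathrm{Dyck}(2n_2)$, $\lambda=\lambda_1*\lambda_2$, let $a,b,i\ge0$ be integers, $\mu_1\in L(\lambda_1;a,i)$, $\mu_2\in L(\lambda_2;i,b)$ and $\mu=\mu_1*\mu_2$ (so $\mu\in L(\lambda;a,b)$). Then there is a bijection $\phi:\mathcal{TD}(\lambda/\mu)\to \mathcal{TD}(\lambda_1/\mu_1)\times\mathcal{TD}(\lambda_2/\mu_2)$ such that if $\phi(T)=(T_1,T_2)$ then $\|T\|=\|T_1\|+\|T_2\|$.
   Context: A Dyck path of length $2n$ is a lattice path from $(0,0)$ to $(n,n)$ with up steps $(0,1)$ and down steps $(1,0)$ never going below $y=x$; $\mathrm{Dyck}(2n)$ is their set. For lattice paths $\nu,\rho$, $\nu*\rho$ is the path obtained by translating $\rho$ so that its starting point is the endpoint of $\nu$ and concatenating. For $\lambda\in\mathrm{Dyck}(2n)$ and integers $a,b\ge0$, let $O=(0,0)$, $N=(n,n)$, $A=O+(-a,a)$, $B=N+(-b,b)$, and $L(\lambda;a,b)$ the set of lattice paths with steps $(0,1),(1,0)$ from $A$ to $B$ never going below $\lambda$. For $\mu\in L(\lambda;a,b)$, $\lambda/\mu$ is the region bounded by $\lambda$, $\mu$ and the segments $OA$, $NB$. A Dyck tile is an edge-connected set of unit cells with no $2\times2$ block whose cell centers, joined by unit up/right moves, form a translated Dyck path; its length is the length of that path. A truncated Dyck tile is obtained from a Dyck tile of positive length by cutting its northeast and southwest cells along their diagonals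 of slope $-1$ and removing the northeast half of the northeast cell and the southwest half of the southwest cell; its half-length is half the length of the original Dyck tile. A truncated Dyck tiling of $\lambda/\mu$ is a set $T$ of truncated Dyck tiles with disjoint interiors contained in $\lambda/\mu$ such that (i) for each $\eta\in T$, if $(\eta+(1,-1))\cap\lambda/\mu$ has nonempty interior then another tile of $T$ contains $\eta+(1,-1)$, and (ii) no two tiles share a border segment of slope $-1$. $\mathcal{TD}(\lambda/\mu)$ is their set; $\|T\|$ is the sum of the half-lengths of the tiles of $T$. *)

From HB Require Import structures.
From mathcomp Require Import all_boot all_order all_algebra.
Set Implicit Arguments. Unset Strict Implicit. Unset Printing Implicit Defensive.
Import Order.TTheory GRing.Theory Num.Theory.
Local Open Scope ring_scope.

(* Lattice paths are encoded by their step sequences:                  *)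
(*   true  = up step    (0,1)                                          *)
(*   false = right step (1,0)                                          *)

Definition ups (p : seq bool) (k : nat) : nat := count id (take k p).
Definition rts (p : seq bool) (k : nat) : nat := count negb (take k p).

(* "height" y - x of the k-th point of p, relative to its starting point *)
Definition hgt (p : seq bool) (k : nat) : int := (ups p k)%:Z - (rts p k)%:Z.

Definition is_dyck (n : nat) (p : seq bool) : Prop :=
  size p = (2 * n)%N /\
  (forall k, (k <= size p)%N -> (rts p k <= ups p k)%N) /\
  ups p (size p) = rts p (size p).

(* mu \in L(lam; a, b): a lattice path from A = (-a,a) to
   B = N + (-b,b) (N = (n,n) the endpoint of lam, size lam = 2n) never going
   below lam.  A path from A to B has exactly 2n steps; its k-th point is
   A + (rts mu k, ups mu k), which lies on the same anti-diagonal x + y = k as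
   the k-th point of lam; "not below lam" means y - x is at least that of lam. *)
Definition inL (lam : seq bool) (a b : nat) (mu : seq bool) : Prop :=
  size mu = size lam /\
  (forall k, (k <= size lam)%N -> hgt lam k <= (2 * a)%:Z + hgt mu k) /\
  (2 * a)%:Z + hgt mu (size lam) = (2 * b)%:Z.

Definition pt_in (lam mu : seq bool) (a : nat) (X Y : int) : bool :=
  let t := X + Y in let h := Y - X in
  [&& 0 <= t, t <= (size lam)%:Z,
      hgt lam (absz t) <= h & h <= (2 * a)%:Z + hgt mu (absz t)].

(* Half cells: the unit cell with lower-left corner (x,y) is cut along its
   diagonal of slope -1 into a southwest half (false) and a northeast half
   (true).  All regions and tiles considered are unions of half cells, so
   we identify them with their sets of half cells (interiors are disjoint
   iff no common half cell, containment iff inclusion of half cell sets). *)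
Definition halfcell := ((int * int) * bool)%type.

Definition hc_corners (c : halfcell) : seq (int * int) :=
  let: ((x, y), ne) := c in
  if ne then [:: (x + 1, y); (x, y + 1); (x + 1, y + 1)]
        else [:: (x, y); (x + 1, y); (x, y + 1)].

(* a (closed) triangle lies in lam/mu iff its three vertices do, since
   lam/mu is convex inside each strip k <= x + y <= k+1 *)
Definition hc_in (lam mu : seq bool) (a : nat) (c : halfcell) : bool :=
  all (fun P => pt_in lam mu a P.1 P.2) (hc_corners c).

(* Truncated Dyck tiles.  A tile is given by ((x0,y0), w): its cells   *)
(* have lower-left corners (x0,y0) + (#right steps, #up steps) of the  *)
(* prefixes of w; the cell centers then follow the path w.             *)
Definition tile := ((int * int) * seq bool)%type.

Definition dyck_word (w : seq bool) : bool :=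
  all (fun k => rts w k <= ups w k)%N (iota 0 (size w).+1) &&
  (ups w (size w) == rts w (size w)).

(* truncated Dyck tiles come from Dyck tiles of positive length *)
Definition valid_tile (e : tile) : bool := (0 < size e.2)%N && dyck_word e.2.

Definition tcell (e : tile) (k : nat) : int * int :=
  (e.1.1 + (rts e.2 k)%:Z, e.1.2 + (ups e.2 k)%:Z).

Definition thalf (e : tile) : seq halfcell :=
  (tcell e 0, true) ::
  flatten [seq [:: (tcell e k, false); (tcell e k, true)] | k <- iota 1 (size e.2).-1]
  ++ [:: (tcell e (size e.2), false)].

Definition half_length (e : tile) : nat := (size e.2 %/ 2)%N.

Definition shift_tile (e : tile) : tile := ((e.1.1 + 1, e.1.2 - 1), e.2).

(* border segments of slope -1 of a truncated tile: the cut diagonals of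
   its first and last cells, from (x+1,y) to (x,y+1) *)
Definition diags (e : tile) : seq ((int * int) * (int * int)) :=
  [seq ((c.1 + 1, c.2), (c.1, c.2 + 1)) | c <- [:: tcell e 0; tcell e (size e.2)]].

(* A finite set of tiles is represented canonically by the list of its
   elements, strictly increasing for the (injective) encoding pickle. *)
Definition canonical_set (T : seq tile) : bool :=
  sorted (fun e f : tile => (pickle e < pickle f)%N) T.

Definition is_tdtiling (lam : seq bool) (a : nat) (mu : seq bool) (T : seq tile) : Prop :=
  canonical_set T /\
  (forall e, e \in T -> valid_tile e) /\
  (forall e, e \in T -> all (hc_in lam mu a) (thalf e)) /\
  (forall e f, e \in T -> f \in T -> e != f ->
     ~~ has (fun c => c \in thalf f) (thalf e)) /\
  (forall e, e \in T -> has (hc_in lam mu a) (thalf (shift_tile e)) ->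
     exists2 f, f \in T &
       (f != e) && all (fun c => c \in thalf f) (thalf (shift_tile e))) /\
  (forall e f, e \in T -> f \in T -> e != f ->
     ~~ has (fun d => d \in diags f) (diags e)).

Definition TD (lam : seq bool) (a : nat) (mu : seq bool) : Type :=
  {T : seq tile | is_tdtiling lam a mu T}.

Definition tnorm (T : seq tile) : nat := sumn [seq half_length e | e <- T].

(* Let lam = lam1 ++ lam2 with lam1, lam2 Dyck paths; lam returns to the
   diagonal on the anti-diagonal K = size lam1.  In a truncated Dyck tiling
   of lam/mu every tile crossing K crosses it at a return of its own Dyck
   word (crossing_at_return, a descent driven by condition (i)), so it cuts
   into a left and a right piece ([splits]).  The left pieces tile lam1/mu1,
   the right pieces translated by (-n1,-n1) tile lam2/mu2
   (tiling_left_pieces, tiling_right_pieces); conversely, glueing each left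
   piece to the right piece starting at its last cell gives a tiling of
   lam/mu (tiling_of_pieces, using the local convexity of the region at the
   return point).  A set of tiles and its pieces determine each other
   (pieces_sub, pieces_determined), so cutting and merging are inverse, and
   half-lengths add up since a left piece glued to a right one has even
   length. *)

From HB Require Import structures.
From mathcomp Require Import all_boot all_order all_algebra.
From mathcomp Require Import zify.
From Stdlib Require Import ProofIrrelevance.

Set Implicit Arguments. Unset Strict Implicit. Unset Printing Implicit Defensive.
Import Order.TTheory GRing.Theory.

Definition csort (T : seq tile) : seq tile :=
  sort (fun e f : tile => (pickle e <= pickle f)%N) (undup T).

Lemma csort_mem T : csort T =i T.
Proof. by move=> x; rewrite mem_sort mem_undup. Qed.

Lemma canonical_setE T :
  canonical_set T = sorted (relpre pickle ltn) T.
Proof. by []. Qed.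

Lemma canonical_csort T : canonical_set (csort T).
Proof.
rewrite canonical_setE -sorted_map ltn_sorted_uniq_leq.
rewrite (map_inj_uniq (pcan_inj (@pickleK _))) sort_uniq undup_uniq /=.
rewrite sorted_map; apply: sort_sorted => x y; exact: leq_total.
Qed.

Lemma canonical_uniq T : canonical_set T -> uniq T.
Proof.
rewrite canonical_setE -sorted_map ltn_sorted_uniq_leq.
by rewrite (map_inj_uniq (pcan_inj (@pickleK _))) => /andP[].
Qed.

Lemma canonical_eq T T' :
  canonical_set T -> canonical_set T' -> T =i T' -> T = T'.
Proof. by apply: irr_sorted_eq => [x y z|x]; [apply: ltn_trans|rewrite ltnn]. Qed.

Lemma tnorm_csort T : uniq T -> tnorm (csort T) = tnorm T.
Proof.
move=> uT; rewrite /tnorm /csort undup_id //.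
by apply/perm_sumn/perm_map; rewrite perm_sort.
Qed.

Lemma ups_rts p k : ups p k + rts p k = minn k (size p).
Proof.
rewrite /ups /rts -size_take_min -(count_predC id).
by congr (_ + _); apply: eq_count.
Qed.

Lemma ups_over p k : size p <= k -> ups p k = ups p (size p).
Proof. by move=> h; rewrite /ups take_oversize // take_size. Qed.

Lemma rts_over p k : size p <= k -> rts p k = rts p (size p).
Proof. by move=> h; rewrite /rts take_oversize // take_size. Qed.

Lemma ups_S p k : k < size p -> ups p k.+1 = ups p k + nth false p k.
Proof. by move=> h; rewrite /ups (take_nth false h) -cats1 count_cat /= addn0. Qed.

Lemma rts_S p k : k < size p -> rts p k.+1 = rts p k + ~~ nth false p k.
Proof. by move=> h; rewrite /rts (take_nth false h) -cats1 count_cat /= addn0. Qed.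

Lemma take_cat_le (p q : seq bool) k : k <= size p -> take k (p ++ q) = take k p.
Proof.
move=> h; rewrite take_cat; case: ltnP => // h2.
have -> : k = size p by apply/eqP; rewrite eqn_leq h h2.
by rewrite subnn take0 cats0 take_size.
Qed.

Lemma ups_catl p q k : k <= size p -> ups (p ++ q) k = ups p k.
Proof. by move=> h; rewrite /ups take_cat_le. Qed.

Lemma rts_catl p q k : k <= size p -> rts (p ++ q) k = rts p k.
Proof. by move=> h; rewrite /rts take_cat_le. Qed.

Lemma ups_catr p q j : ups (p ++ q) (size p + j) = ups p (size p) + ups q j.
Proof. by rewrite /ups take_cat ltnNge leq_addr /= addKn count_cat take_size. Qed.

Lemma rts_catr p q j : rts (p ++ q) (size p + j) = rts p (size p) + rts q j.
Proof. by rewrite /rts take_cat ltnNge leq_addr /= addKn count_cat take_size. Qed.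

Lemma ups_take p k j : ups (take k p) j = ups p (minn j k).
Proof. by rewrite /ups take_min. Qed.

Lemma rts_take p k j : rts (take k p) j = rts p (minn j k).
Proof. by rewrite /rts take_min. Qed.

Lemma count_take_drop (P : pred bool) p k j :
  count P (take j (drop k p)) + count P (take k p) = count P (take (k + j) p).
Proof.
rewrite take_drop (addnC k j); set q := take (j + k) p.
have -> : take k p = take k q by rewrite /q take_takel // leq_addl.
by rewrite addnC -count_cat cat_take_drop.
Qed.

Lemma ups_drop p k j : ups (drop k p) j + ups p k = ups p (k + j).
Proof. exact: count_take_drop. Qed.

Lemma rts_drop p k j : rts (drop k p) j + rts p k = rts p (k + j).
Proof. exact: count_take_drop. Qed.

Lemma ups0 p : ups p 0 = 0. Proof. by rewrite /ups take0. Qed.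
Lemma rts0 p : rts p 0 = 0. Proof. by rewrite /rts take0. Qed.

Lemma is_dyckP n p : is_dyck n p ->
  [/\ size p = 2 * n, forall k, rts p k <= ups p k & ups p (size p) = rts p (size p)].
Proof.
case=> s [h e]; split=> // k; case: (leqP k (size p)) => hk; first exact: h.
by rewrite ups_over ?rts_over ?(ltnW hk) //; apply: h.
Qed.

Local Open Scope ring_scope.

Lemma hgt_catl p q k : (k <= size p)%N -> hgt (p ++ q) k = hgt p k.
Proof. by move=> h; rewrite /hgt ups_catl ?rts_catl. Qed.

Lemma hgt_catr p q j : hgt (p ++ q) (size p + j) = hgt p (size p) + hgt q j.
Proof. rewrite /hgt ups_catr rts_catr; lia. Qed.

Lemma hgt_step p k : hgt p k.+1 - 1 <= hgt p k <= hgt p k.+1 + 1.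
Proof.
rewrite /hgt; case: (ltnP k (size p)) => h.
  rewrite ups_S ?rts_S //; case: (nth false p k) => /=; lia.
rewrite (ups_over (leqW h)) (rts_over (leqW h)) (ups_over h) (rts_over h); lia.
Qed.

Lemma hgt_take p k j : hgt (take k p) j = hgt p (minn j k).
Proof. by rewrite /hgt ups_take rts_take. Qed.

Lemma hgt_drop p k j : hgt (drop k p) j = hgt p (k + j) - hgt p k.
Proof. rewrite /hgt -ups_drop -rts_drop; lia. Qed.

Lemma dyck_wordP w :
  dyck_word w <-> (forall k, 0 <= hgt w k) /\ hgt w (size w) = 0.
Proof.
split=> [/andP[/allP h /eqP e]|[h e]].
  split; last by rewrite /hgt e subrr.
  move=> k; suff: (rts w k <= ups w k)%N by rewrite /hgt; lia.
  case: (leqP k (size w)) => hk; first by apply: h; rewrite mem_iota add0n ltnS.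
  by rewrite ups_over ?rts_over ?(ltnW hk) // e.
apply/andP; split; last by apply/eqP; move: e; rewrite /hgt; lia.
by apply/allP=> k _; have := h k; rewrite /hgt; lia.
Qed.

Lemma hgt_even w k : hgt w k = 0 -> (k <= size w)%N -> ~~ odd k.
Proof.
move=> h hk; have := ups_rts w k; move: h; rewrite /hgt.
have -> : minn k (size w) = k by lia.
move=> h1 h2; apply/negP => o; lia.
Qed.

Definition cdiag (c : int * int) : int := c.1 + c.2.
Definition chgt (c : int * int) : int := c.2 - c.1.

Lemma cell_parity (c : int * int) : exists z : int, cdiag c = chgt c + 2 * z.
Proof. by case: c => x y; exists x; rewrite /cdiag /chgt /=; lia. Qed.

Lemma cdiag_tcell e k : cdiag (tcell e k) = cdiag e.1 + (minn k (size e.2))%:Z.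
Proof. by case: e => [[x y] w]; rewrite /tcell /cdiag /= -(ups_rts w k); lia. Qed.

Lemma chgt_tcell e k : chgt (tcell e k) = chgt e.1 + hgt e.2 k.
Proof. by case: e => [[x y] w]; rewrite /tcell /chgt /hgt /=; lia. Qed.

Lemma tcell0 e : tcell e 0 = e.1.
Proof. by case: e => [[x y] w]; rewrite /tcell /= ups0 rts0 !addr0. Qed.

Lemma tcell_inj e j k : (j <= size e.2)%N -> (k <= size e.2)%N ->
  cdiag (tcell e j) = cdiag (tcell e k) -> j = k.
Proof. by rewrite !cdiag_tcell => hj hk; lia. Qed.

Lemma mem_thalf e c (b : bool) : (0 < size e.2)%N ->
  ((c, b) \in thalf e) <->
  exists k, (if b then (k < size e.2)%N else (0 < k <= size e.2)%N) /\ c = tcell e k.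
Proof.
move=> hm; rewrite /thalf in_cons mem_cat mem_seq1; split.
- case/or3P.
  + by move/eqP => [-> ->]; exists 0%N.
  + case/flatten_mapP=> k; rewrite mem_iota => /andP[k1 k2].
    by rewrite !inE => /orP[] /eqP [-> ->]; exists k; split=> //; lia.
  + by move/eqP => [-> ->]; exists (size e.2); split=> //; lia.
- case=> k []; case: b => hk ->.
  + case: k hk => [|k] hk; first by rewrite eqxx.
    apply/or3P; apply: Or32; apply/flatten_mapP; exists k.+1.
      by rewrite mem_iota; lia.
    by rewrite !inE eqxx orbT.
  + case/andP: hk => k1; rewrite leq_eqVlt => /orP[/eqP ->|k2].
      by rewrite eqxx !orbT.
    apply/or3P; apply: Or32; apply/flatten_mapP; exists k; last by rewrite !inE eqxx.
    by rewrite mem_iota; lia.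
Qed.

Definition shiftc (c : int * int) : int * int := (c.1 + 1, c.2 - 1).

Lemma cdiag_shiftc c : cdiag (shiftc c) = cdiag c.
Proof. by rewrite /cdiag /shiftc /=; lia. Qed.

Lemma chgt_shiftc c : chgt (shiftc c) = chgt c - 2.
Proof. by rewrite /chgt /shiftc /=; lia. Qed.

Lemma tcell_shift e k : tcell (shift_tile e) k = shiftc (tcell e k).
Proof. by case: e => [[x y] w]; rewrite /tcell /shiftc /=; congr pair; lia. Qed.

Lemma thalf_shift e :
  thalf (shift_tile e) = map (fun h => (shiftc h.1, h.2)) (thalf e).
Proof.
rewrite /thalf /= map_cat map_flatten -map_comp /= tcell_shift.
congr (_ :: _ ++ _); last by rewrite /= tcell_shift.
by congr flatten; apply: eq_map => k /=; rewrite tcell_shift.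
Qed.

Lemma in_shift e c b : (c, b) \in thalf e -> (shiftc c, b) \in thalf (shift_tile e).
Proof. by move=> h; rewrite thalf_shift; apply: (map_f (fun h => (shiftc h.1, h.2)) h). Qed.

(* Translation by (v,v) along the diagonal, which moves the second region
   lam2/mu2 into place inside (lam1 ++ lam2)/(mu1 ++ mu2). *)
Definition transl (v : int) (e : tile) : tile := ((e.1.1 + v, e.1.2 + v), e.2).
Definition translc (v : int) (c : int * int) : int * int := (c.1 + v, c.2 + v).
Definition translh (v : int) (h : halfcell) : halfcell := (translc v h.1, h.2).

Lemma tcell_transl v e k : tcell (transl v e) k = translc v (tcell e k).
Proof. by case: e => [[x y] w]; rewrite /tcell /translc /=; congr pair; lia. Qed.

Lemma thalf_transl v e : thalf (transl v e) = map (translh v) (thalf e).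
Proof.
rewrite /thalf /= map_cat map_flatten -map_comp /= tcell_transl.
congr (_ :: _ ++ _); last by rewrite /= tcell_transl.
by congr flatten; apply: eq_map => k /=; rewrite tcell_transl.
Qed.

Lemma diags_transl v e :
  diags (transl v e) = map (fun d => (translc v d.1, translc v d.2)) (diags e).
Proof.
rewrite /diags !tcell_transl /= /translc /=.
by congr [:: (_, _); (_, _)]; congr pair; lia.
Qed.

Lemma shift_transl v e : shift_tile (transl v e) = transl v (shift_tile e).
Proof. by case: e => [[x y] w]; rewrite /transl /shift_tile /=; congr (_, _, _); lia. Qed.

Lemma translK v : cancel (transl v) (transl (- v)).
Proof. by case=> [[x y] w]; rewrite /transl /=; congr (_, _, _); lia. Qed.

Lemma transl_inj v : injective (transl v).
Proof. exact: can_inj (translK v). Qed.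

Lemma translc_inj (v : int) : injective (translc v).
Proof. by move=> [x y] [x' y'] [] *; congr pair; lia. Qed.

Lemma translh_inj v : injective (translh v).
Proof.
move=> [c b] [d b'] E; have /= E1 := congr1 fst E; have /= E2 := congr1 snd E.
by rewrite (translc_inj E1) E2.
Qed.

Lemma translc2_inj v :
  injective (fun d : (int * int) * (int * int) => (translc v d.1, translc v d.2)).
Proof.
move=> [p q] [p' q'] E; have /= E1 := congr1 fst E; have /= E2 := congr1 snd E.
by rewrite (translc_inj E1) (translc_inj E2).
Qed.

(* Working with an abstract region lets us pass
   between the big region and its two halves. *)
Definition tiling (R : halfcell -> bool) (T : seq tile) : Prop :=
  (forall e : tile, e \in T -> valid_tile e) /\
  (forall e : tile, e \in T -> all R (thalf e)) /\
  (forall e f : tile, e \in T -> f \in T -> e != f ->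
     ~~ has (fun c => c \in thalf f) (thalf e)) /\
  (forall e : tile, e \in T -> has R (thalf (shift_tile e)) ->
     exists2 f : tile, f \in T &
       (f != e) && all (fun c => c \in thalf f) (thalf (shift_tile e))) /\
  (forall e f : tile, e \in T -> f \in T -> e != f ->
     ~~ has (fun d => d \in diags f) (diags e)).

Lemma tiling_mem R T T' : T =i T' -> tiling R T -> tiling R T'.
Proof.
move=> E [h1 [h2 [h3 [h4 h5]]]]; split; [|split; [|split; [|split]]].
- by move=> e; rewrite -E; apply: h1.
- by move=> e; rewrite -E; apply: h2.
- by move=> e f; rewrite -!E; apply: h3.
- by move=> e; rewrite -E => eT /(h4 _ eT) [f fT H]; exists f; rewrite -?E.
- by move=> e f; rewrite -!E; apply: h5.
Qed.

Lemma tiling_ext R R' T : R =1 R' -> tiling R T -> tiling R' T.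
Proof.
move=> E [h1 [h2 [h3 [h4 h5]]]]; split; [|split; [|split; [|split]]] => //.
- by move=> e eT; rewrite -(eq_all E); apply: h2.
- by move=> e eT; rewrite -(eq_has E); apply: h4.
Qed.

Lemma tiling_transl R R' v T : (forall h, R' (translh v h) = R h) ->
  tiling R T -> tiling R' (map (transl v) T).
Proof.
move=> E [h1 [h2 [h3 [h4 h5]]]].
have memh e c : (translh v c \in thalf (transl v e)) = (c \in thalf e).
  by rewrite thalf_transl (mem_map (@translh_inj v)).
split; [|split; [|split; [|split]]].
- by move=> _ /mapP [e eT ->]; exact: (h1 e eT).
- move=> _ /mapP [e eT ->]; rewrite thalf_transl all_map.
  by rewrite (eq_all (a2 := R)) ?h2.
- move=> _ _ /mapP [e eT ->] /mapP [f fT ->] ne.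
  rewrite [thalf (transl v e)]thalf_transl has_map.
  rewrite (eq_has (a2 := fun c => c \in thalf f)) => [|c]; last exact: memh.
  by apply: h3 => //; apply: contra ne => /eqP ->.
- move=> _ /mapP [e eT ->]; rewrite shift_transl thalf_transl has_map.
  rewrite (eq_has (a2 := R)) // => /(h4 _ eT) [f fT /andP [ne H]].
  exists (transl v f); first exact: map_f.
  rewrite (inj_eq (@transl_inj v)) ne [thalf (transl v _)]thalf_transl all_map.
  by rewrite (eq_all (a2 := fun c => c \in thalf f)) // => c; exact: (mem_map (@translh_inj v)).
- move=> _ _ /mapP [e eT ->] /mapP [f fT ->] ne.
  rewrite [diags (transl v e)]diags_transl has_map diags_transl.
  rewrite (eq_has (a2 := fun d => d \in diags f)) => [|d]; last exact: (mem_map (@translc2_inj v)).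
  by apply: h5 => //; apply: contra ne => /eqP ->.
Qed.

Lemma tiling_valid R T e : tiling R T -> e \in T -> valid_tile e.
Proof. by case=> h1 _; apply: h1. Qed.

Lemma tiling_in R T e hc : tiling R T -> e \in T -> hc \in thalf e -> R hc.
Proof. by case=> _ [h2 _] eT hT; move/allP: (h2 e eT); apply. Qed.

Lemma tiling_disj R T g g' hc : tiling R T -> g \in T -> g' \in T ->
  hc \in thalf g -> hc \in thalf g' -> g = g'.
Proof.
case=> _ [_ [h3 _]] gT g'T H H'; apply/eqP; apply: contraT => ne.
by have := h3 _ _ gT g'T ne => /hasPn /(_ _ H); rewrite H'.
Qed.

Lemma valid_size e : valid_tile e -> (0 < size e.2)%N.
Proof. by case/andP. Qed.

Lemma valid_dyck e : valid_tile e -> (forall k, 0 <= hgt e.2 k) /\ hgt e.2 (size e.2) = 0.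
Proof. by case/andP => _ /dyck_wordP. Qed.

Definition lastc (e : tile) : int * int := tcell e (size e.2).
Definition cut_diag (c : int * int) := ((c.1 + 1, c.2), (c.1, c.2 + 1)).

Lemma lastc_cdiag e : cdiag (lastc e) = cdiag e.1 + (size e.2)%:Z.
Proof. by rewrite /lastc cdiag_tcell; lia. Qed.

Lemma lastc_shift e : lastc (shift_tile e) = shiftc (lastc e).
Proof. by rewrite /lastc tcell_shift. Qed.

Lemma first_in e : valid_tile e -> (e.1, true) \in thalf e.
Proof. by move=> /valid_size v; apply/mem_thalf => //; exists 0%N; rewrite tcell0. Qed.

Lemma last_in e : valid_tile e -> (lastc e, false) \in thalf e.
Proof. by move=> /valid_size v; apply/mem_thalf => //; exists (size e.2); rewrite v leqnn. Qed.

Lemma diagsE e : diags e = [:: cut_diag e.1; cut_diag (lastc e)].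
Proof. by rewrite /diags tcell0. Qed.

Lemma cut_diag_inj : injective cut_diag.
Proof.
move=> [x y] [x' y'] E; have /= E1 := congr1 fst E; have /= E2 := congr1 snd E.
by case: E1 => _ ->; case: E2 => -> _.
Qed.

Lemma tiling_diag R T g g' c : tiling R T -> g \in T -> g' \in T ->
  (c = g.1 \/ c = lastc g) -> (c = g'.1 \/ c = lastc g') -> g = g'.
Proof.
case=> _ [_ [_ [_ h5]]] gT g'T Hc Hc'; apply/eqP; apply: contraT => ne.
have inD h : c = h.1 \/ c = lastc h -> cut_diag c \in diags h.
  by rewrite diagsE !inE; case=> ->; rewrite eqxx ?orbT.
by have := h5 _ _ gT g'T ne => /hasPn /(_ _ (inD _ Hc)); rewrite inD.
Qed.

Lemma has_diags (e f : tile) : has (fun d => d \in diags f) (diags e) ->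
  exists c, (c = e.1 \/ c = lastc e) /\ (c = f.1 \/ c = lastc f).
Proof.
case/hasP => d; rewrite !diagsE !inE.
by case/orP => /eqP -> /orP [] /eqP /cut_diag_inj ->; eexists;
  first [by split; left | by split; [left|right] | by split; [right|left] | by split; right].
Qed.

Lemma in_thalfNE e k : valid_tile e -> (k < size e.2)%N -> (tcell e k, true) \in thalf e.
Proof. by move=> /valid_size v hk; apply/mem_thalf => //; exists k. Qed.

Lemma in_thalfSW e k : valid_tile e -> (0 < k <= size e.2)%N -> (tcell e k, false) \in thalf e.
Proof. by move=> /valid_size v hk; apply/mem_thalf => //; exists k. Qed.

Definition in_region (lam mu : seq bool) (a : nat) (t h : int) : bool :=
  [&& 0 <= t, t <= (size lam)%:Z, hgt lam (absz t) <= h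
    & h <= (2 * a)%:Z + hgt mu (absz t)].

Lemma in_region_neg lam mu a t h : t < 0 -> in_region lam mu a t h = false.
Proof. by rewrite /in_region => h0; apply/negP => /and4P []; lia. Qed.

Lemma in_region_big lam mu a t h : (size lam)%:Z < t -> in_region lam mu a t h = false.
Proof. by rewrite /in_region => h0; apply/negP => /and4P []; lia. Qed.

Lemma in_region_above lam mu a t h : in_region lam mu a t h -> hgt lam (absz t) <= h.
Proof. by case/and4P. Qed.

Lemma hc_inSW lam mu a c : hc_in lam mu a (c, false) =
  [&& in_region lam mu a (cdiag c) (chgt c),
      in_region lam mu a (cdiag c + 1) (chgt c - 1)
    & in_region lam mu a (cdiag c + 1) (chgt c + 1)].
Proof.
case: c => x y; rewrite /hc_in /= andbT /pt_in /in_region /cdiag /chgt /=.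
have -> : x + 1 + y = x + y + 1 by lia.
have -> : y - (x + 1) = y - x - 1 by lia.
have -> : x + (y + 1) = x + y + 1 by lia.
by have -> : y + 1 - x = y - x + 1 by lia.
Qed.

Lemma hc_inNE lam mu a c : hc_in lam mu a (c, true) =
  [&& in_region lam mu a (cdiag c + 1) (chgt c - 1),
      in_region lam mu a (cdiag c + 1) (chgt c + 1)
    & in_region lam mu a (cdiag c + 2) (chgt c)].
Proof.
case: c => x y; rewrite /hc_in /= andbT /pt_in /in_region /cdiag /chgt /=.
have -> : x + 1 + y = x + y + 1 by lia.
have -> : y - (x + 1) = y - x - 1 by lia.
have -> : x + (y + 1) = x + y + 1 by lia.
have -> : y + 1 - x = y - x + 1 by lia.
have -> : x + 1 + (y + 1) = x + y + 2 by lia.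
by have -> : y + 1 - (x + 1) = y - x by lia.
Qed.

Definition strip (hc : halfcell) : int := cdiag hc.1 + (if hc.2 then 1 else 0).

Lemma strip_shiftc c b : strip (shiftc c, b) = strip (c, b).
Proof. by rewrite /strip /= cdiag_shiftc. Qed.

Section Concatenation.
(* The region (lam1 ++ lam2)/(mu1 ++ mu2) cut along anti-diagonal
   K = size lam1: left of K it is lam1/mu1, right of K it is lam2/mu2
   translated by (v,v), where K = 2v. *)
Variables (lam1 lam2 mu1 mu2 : seq bool) (a : nat).
Hypothesis size_mu1 : size mu1 = size lam1.

Lemma in_region_catl t h : t <= (size lam1)%:Z ->
  in_region (lam1 ++ lam2) (mu1 ++ mu2) a t h = in_region lam1 mu1 a t h.
Proof.
move=> ht; case: (ltP t 0) => h0; first by rewrite !in_region_neg.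
by rewrite /in_region size_cat !hgt_catl ?size_mu1; lia.
Qed.

Lemma hc_in_catl hc : hc_in lam1 mu1 a hc =
  hc_in (lam1 ++ lam2) (mu1 ++ mu2) a hc && (strip hc + 1 <= (size lam1)%:Z).
Proof.
case: hc => c []; rewrite ?hc_inNE ?hc_inSW /strip /=.
- case: (leP (cdiag c + 1 + 1) (size lam1)%:Z) => hk.
    by rewrite !in_region_catl ?andbT //; lia.
  by rewrite [in_region _ _ _ (cdiag c + 2) _]in_region_big ?andbF //; lia.
- case: (leP (cdiag c + 0 + 1) (size lam1)%:Z) => hk.
    by rewrite !in_region_catl ?andbT //; lia.
  by rewrite [in_region _ _ _ _ (chgt c - 1)]in_region_big ?andbF //; lia.
Qed.

Variable i : nat.
Hypothesis lam1_returns : hgt lam1 (size lam1) = 0.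
Hypothesis mu1_ends : (2 * a)%:Z + hgt mu1 (size lam1) = (2 * i)%:Z.

Lemma in_region_catr t h : (size lam1)%:Z <= t ->
  in_region (lam1 ++ lam2) (mu1 ++ mu2) a t h =
  in_region lam2 mu2 i (t - (size lam1)%:Z) h.
Proof.
move=> ht; have E : absz t = (size lam1 + absz (t - (size lam1)%:Z))%N by lia.
have El : hgt (lam1 ++ lam2) (absz t) = hgt lam2 (absz (t - (size lam1)%:Z)).
  by rewrite E hgt_catr lam1_returns add0r.
have Em : hgt (mu1 ++ mu2) (absz t) =
    hgt mu1 (size lam1) + hgt mu2 (absz (t - (size lam1)%:Z)).
  by rewrite E -{1}size_mu1 hgt_catr size_mu1.
rewrite /in_region size_cat El Em addrA mu1_ends.
by congr andb; [lia | congr andb; lia].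
Qed.


Lemma hc_in_catr (v : int) hc : (size lam1)%:Z = 2 * v ->
  hc_in lam2 mu2 i (translh (- v) hc) =
  hc_in (lam1 ++ lam2) (mu1 ++ mu2) a hc && ((size lam1)%:Z <= strip hc).
Proof.
move=> hv; case: hc => c b.
have Ht : cdiag (translc (- v) c) = cdiag c - (size lam1)%:Z by rewrite /cdiag /translc /=; lia.
have Hh : chgt (translc (- v) c) = chgt c by rewrite /chgt /translc /=; lia.
case: b; rewrite /translh /= ?hc_inNE ?hc_inSW Ht Hh /strip /=.
- case: (leP (size lam1)%:Z (cdiag c + 1)) => hk; last by rewrite andbF in_region_neg //; lia.
  rewrite !in_region_catr ?andbT; try lia.
  by congr [&& in_region _ _ _ _ _, in_region _ _ _ _ _ & in_region _ _ _ _ _]; lia.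
- case: (leP (size lam1)%:Z (cdiag c + 0)) => hk; last by rewrite andbF in_region_neg //; lia.
  rewrite !in_region_catr ?andbT; try lia.
  by congr [&& in_region _ _ _ _ _, in_region _ _ _ _ _ & in_region _ _ _ _ _]; lia.
Qed.

End Concatenation.

Lemma tile_start_above lam mu a T (e : tile) : (forall t, 0 <= hgt lam t) ->
  tiling (hc_in lam mu a) T -> e \in T -> 1 <= chgt e.1.
Proof.
move=> lam_nonneg HT eT; have v := tiling_valid HT eT.
have := tiling_in HT eT (first_in v); rewrite hc_inNE => /and3P [p1 _ _].
by move: (in_region_above p1); have := lam_nonneg (absz (cdiag e.1 + 1)); lia.
Qed.

Section ReturnPoint.
Variables (lam mu : seq bool) (a K : nat).
Hypothesis lam_returns : hgt lam K = 0.
Let R := hc_in lam mu a.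

Lemma fill_NE_at_return c : cdiag c = K%:Z - 1 ->
  R (shiftc c, false) -> R (c, true) -> R (shiftc c, true).
Proof.
move=> Hc; rewrite /R !hc_inSW !hc_inNE cdiag_shiftc chgt_shiftc.
case/and3P => _ p2 p3 /and3P [_ _ q3]; rewrite p2 p3 /=.
move: p2 q3; rewrite /in_region => /and4P [_ _ a3 _] /and4P [b1 b2 b3 b4].
have EK : absz (cdiag c + 1) = K by lia.
have EK1 : absz (cdiag c + 2) = K.+1 by lia.
rewrite EK lam_returns in a3; rewrite EK1 in b3 b4 *.
by have := hgt_step lam K; rewrite lam_returns => hs; apply/and4P; split => //; lia.
Qed.

Lemma fill_SW_at_return c : cdiag c = K%:Z - 1 ->
  R (shiftc c, true) -> R (c, false) -> R (shiftc c, false).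
Proof.
move=> Hc; rewrite /R !hc_inSW !hc_inNE cdiag_shiftc chgt_shiftc.
case/and3P => p1 p2 _ /and3P [q1 _ _]; rewrite p1 p2 !andbT.
move: p1 q1; rewrite /in_region => /and4P [_ _ a3 _] /and4P [b1 b2 b3 b4].
have EK : absz (cdiag c + 1) = K by lia.
rewrite EK lam_returns in a3.
have EK1 : (absz (cdiag c)).+1 = K by lia.
by have := hgt_step lam (absz (cdiag c)); rewrite EK1 lam_returns => hs;
  apply/and4P; split => //; lia.
Qed.

(* A cell on anti-diagonal K - 1 whose SW half lies in the region is at
   height at least 1; if it is higher, the SW half of its shift still lies
   in the region (the region is at least 2 high at the return point). *)
Lemma return_cell_above c : cdiag c = K%:Z - 1 -> R (c, false) -> 1 <= chgt c.
Proof.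
move=> Hc; rewrite /R hc_inSW => /and3P [_ p2 _]; move: (in_region_above p2).
have -> : absz (cdiag c + 1) = K by lia.
by rewrite lam_returns; lia.
Qed.

Lemma shift_return_cell c : cdiag c = K%:Z - 1 -> 3 <= chgt c ->
  R (c, false) -> R (shiftc c, false).
Proof.
move=> Hc H3; rewrite /R !hc_inSW cdiag_shiftc chgt_shiftc /in_region.
case/and3P => /and4P [a1 a2 a3 a4] /and4P [b1 b2 b3 b4] /and4P [c1 c2 c3 c4].
have HKm1 : hgt lam (absz (cdiag c)) <= 1.
  have := hgt_step lam (absz (cdiag c)).
  have -> : (absz (cdiag c)).+1 = K by lia.
  lia.
have EK : absz (cdiag c + 1) = K by lia.
move: b3 b4 c3 c4; rewrite EK lam_returns => b3 b4 c3 c4.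
by apply/and3P; split; apply/and4P; split => //; lia.
Qed.

Hypothesis lam_nonneg : forall t, 0 <= hgt lam t.
Hypothesis K_even : ~~ odd K.

Variable T : seq tile.
Hypothesis T_tiling : tiling R T.

(* The descent step: if a tile crosses K at height >= 3, the SW half of the
   shifted crossing cell lies in the region, so by condition (i) some tile
   f covers the shift of e; f crosses K at the shifted cell and passes
   through the shift of the first cell of e. *)
Lemma crossing_shifted (e : tile) k : e \in T -> (0 < k < size e.2)%N ->
  cdiag (tcell e k) = K%:Z - 1 -> 3 <= chgt (tcell e k) ->
  exists (f : tile) j, [/\ f \in T, (0 < j < size f.2)%N, tcell f j = shiftc (tcell e k)
                & exists j0, tcell f j0 = shiftc e.1].
Proof.
move=> eT hk Hc H3; have v := tiling_valid T_tiling eT.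
have hk' : (0 < k <= size e.2)%N by lia.
have sSW : (shiftc (tcell e k), false) \in thalf (shift_tile e).
  exact/in_shift/in_thalfSW.
have sNE : (shiftc (tcell e k), true) \in thalf (shift_tile e).
  by apply/in_shift/in_thalfNE; lia.
have s0 : (shiftc e.1, true) \in thalf (shift_tile e) by apply/in_shift/first_in.
have hasR : has R (thalf (shift_tile e)).
  apply/hasP; exists (shiftc (tcell e k), false) => //.
  exact: shift_return_cell Hc H3 (tiling_in T_tiling eT (in_thalfSW v hk')).
have [_ [_ [_ [cond_i _]]]] := T_tiling.
have [f fT /andP [_ /allP Hf]] := cond_i e eT hasR.
have sf := valid_size (tiling_valid T_tiling fT).
have [j1 [hj1 E1]] := (mem_thalf _ _ sf).1 (Hf _ sSW).
have [j2 [hj2 E2]] := (mem_thalf _ _ sf).1 (Hf _ sNE).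
have [j0 [_ E0]] := (mem_thalf _ _ sf).1 (Hf _ s0).
have j12 : j1 = j2.
  by apply: (tcell_inj (e := f)); [case/andP: hj1 | apply: ltnW | rewrite -E1 -E2].
exists f, j1; split=> //; last by exists j0.
by subst j2; case/andP: hj1 => -> _.
Qed.

(* Otherwise the crossing cell is at height >= 3 (by parity and
   since tiles start above the diagonal), and the descent step produces a
   tile crossing K two units lower; by induction on the height that tile
   crosses at height 0, which contradicts its passing through the shift of
   the first cell of e. *)
Lemma crossing_at_return (e : tile) k : e \in T -> (0 < k < size e.2)%N ->
  cdiag e.1 + k%:Z + 1 = K%:Z -> hgt e.2 k = 0.
Proof.
move: {2}(absz (chgt (tcell e k))) (leqnn (absz (chgt (tcell e k)))) => N.
elim: N e k => [|N IH] e k hN eT hk hK; have v := tiling_valid T_tiling eT;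
  have Hc : cdiag (tcell e k) = K%:Z - 1 by rewrite cdiag_tcell; lia.
  have hk' : (0 < k <= size e.2)%N by lia.
  have := return_cell_above Hc (tiling_in T_tiling eT (in_thalfSW v hk')); lia.
have [Dnn _] := valid_dyck v.
apply/eqP; apply: contraT => /eqP hne.
have hpos : 0 < hgt e.2 k by have := Dnn k; lia.
have Hch := chgt_tcell e k.
have H3 : 3 <= chgt (tcell e k).
  have [z Hz] := cell_parity (tcell e k); have [q Hq] : exists q, K = (2 * q)%N.
    by exists K./2; rewrite -{1}(odd_double_half K) (negbTE K_even) add0n -muln2 mulnC.
  by have := tile_start_above lam_nonneg T_tiling eT; lia.
have [f [j [fT hj Ej [j0 E0]]]] := crossing_shifted eT hk Hc H3.
have [Fnn _] := valid_dyck (tiling_valid T_tiling fT).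
have Hf1 : chgt (tcell f j) = chgt (tcell e k) - 2 by rewrite Ej chgt_shiftc.
have hzf : hgt f.2 j = 0.
  apply: (IH f j) => //; first by rewrite Hf1; lia.
  by move: (congr1 cdiag Ej); rewrite cdiag_shiftc Hc cdiag_tcell; lia.
move: Hf1 (congr1 chgt E0); rewrite !chgt_tcell chgt_shiftc hzf.
by have := Fnn j0; lia.
Qed.

End ReturnPoint.

Definition glue (e1 e2 : tile) : tile := (e1.1, e1.2 ++ e2.2).
Definition tile_pre (k : nat) (e : tile) : tile := (e.1, take k e.2).
Definition tile_suf (k : nat) (e : tile) : tile := (tcell e k, drop k e.2).

Lemma tile_eq (e f : tile) : e.1 = f.1 -> e.2 = f.2 -> e = f.
Proof. by case: e f => p w [p' w'] /= -> ->. Qed.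

Lemma glue_size e1 e2 : size (glue e1 e2).2 = (size e1.2 + size e2.2)%N.
Proof. exact: size_cat. Qed.

Lemma glue_cell1 e1 e2 j : (j <= size e1.2)%N -> tcell (glue e1 e2) j = tcell e1 j.
Proof. by move=> h; rewrite /tcell /= ups_catl ?rts_catl. Qed.

Lemma glue_cell2 e1 e2 j : e2.1 = lastc e1 ->
  tcell (glue e1 e2) (size e1.2 + j) = tcell e2 j.
Proof.
case: e2 => [[x y] w2] /= ->; rewrite /tcell /lastc /tcell /= ups_catr rts_catr.
by congr pair; lia.
Qed.

Lemma glue_lastc e1 e2 : e2.1 = lastc e1 -> lastc (glue e1 e2) = lastc e2.
Proof. by move=> h; rewrite /lastc glue_size glue_cell2. Qed.

Lemma glue_valid e1 e2 : valid_tile e1 -> valid_tile e2 -> valid_tile (glue e1 e2).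
Proof.
move=> v1 v2; have s1 := valid_size v1.
have [D1 m1] := valid_dyck v1; have [D2 m2] := valid_dyck v2.
apply/andP; split; first by rewrite glue_size; lia.
apply/dyck_wordP; split; last by rewrite glue_size /glue /= hgt_catr m1 m2 addr0.
move=> k; rewrite /glue /=; case: (leqP k (size e1.2)) => hk; first by rewrite hgt_catl.
have -> : k = (size e1.2 + (k - size e1.2))%N by lia.
by rewrite hgt_catr m1 add0r.
Qed.

Lemma mem_thalf_glue e1 e2 hc : (0 < size e1.2)%N -> (0 < size e2.2)%N ->
  e2.1 = lastc e1 -> (hc \in thalf (glue e1 e2)) = (hc \in thalf e1) || (hc \in thalf e2).
Proof.
move=> s1 s2 E; case: hc => c b.
have sg : (0 < size (glue e1 e2).2)%N by rewrite glue_size; lia.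
apply/idP/idP.
- move/(mem_thalf _ _ sg) => [k [hk ->]].
  case: (ltnP k (size e1.2)) => h1.
    apply/orP; left; apply/mem_thalf => //; exists k; rewrite glue_cell1 ?(ltnW h1) //.
    by split=> //; case: b hk; lia.
  case: (boolP ((k == size e1.2) && ~~ b)) => [/andP [/eqP -> nb]|h2].
    apply/orP; left; apply/mem_thalf => //; exists (size e1.2); rewrite glue_cell1 //.
    by split=> //; case: b nb hk; lia.
  have -> : k = (size e1.2 + (k - size e1.2))%N by lia.
  apply/orP; right; apply/mem_thalf => //; exists (k - size e1.2)%N.
  by rewrite glue_cell2 //; split=> //; move: h2 hk; case: b; rewrite glue_size; lia.
- case/orP.
  + move/(mem_thalf _ _ s1) => [k [hk ->]]; apply/mem_thalf => //; exists k.
    by rewrite glue_cell1; [split=> //; case: b hk; rewrite glue_size; lia | case: b hk; lia].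
  + move/(mem_thalf _ _ s2) => [k [hk ->]]; apply/mem_thalf => //; exists (size e1.2 + k)%N.
    by rewrite glue_cell2 //; split=> //; case: b hk; rewrite glue_size; lia.
Qed.

Lemma glue_pre_suf k e : glue (tile_pre k e) (tile_suf k e) = e.
Proof. by case: e => p w; rewrite /glue /= cat_take_drop. Qed.

Lemma tile_pre_size k e : (k <= size e.2)%N -> size (tile_pre k e).2 = k.
Proof. exact: size_takel. Qed.

Lemma tile_suf_first k e : (k <= size e.2)%N -> (tile_suf k e).1 = lastc (tile_pre k e).
Proof.
case: e => p w hk; rewrite /tile_suf /tile_pre /lastc /= size_takel //.
by rewrite /tcell /= ups_take rts_take minnn.
Qed.

Lemma tile_pre_valid k e : valid_tile e -> (0 < k <= size e.2)%N -> hgt e.2 k = 0 ->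
  valid_tile (tile_pre k e).
Proof.
move=> v /andP [k0 hk] hz; have [D _] := valid_dyck v.
apply/andP; split; first by rewrite tile_pre_size.
apply/dyck_wordP; rewrite tile_pre_size //.
by split=> [j|]; rewrite /= hgt_take ?minnn.
Qed.

Lemma tile_suf_valid k e : valid_tile e -> (k < size e.2)%N -> hgt e.2 k = 0 ->
  valid_tile (tile_suf k e).
Proof.
move=> v hk hz; have [D m] := valid_dyck v.
apply/andP; split; first by rewrite /tile_suf /= size_drop; lia.
apply/dyck_wordP; rewrite /tile_suf /= size_drop; split=> [j|]; rewrite hgt_drop hz subr0 //.
by have -> : (k + (size e.2 - k))%N = size e.2 by lia.
Qed.

Definition left_tile (K : int) (e : tile) : bool :=
  all (fun hc => strip hc + 1 <= K) (thalf e).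
Definition right_tile (K : int) (e : tile) : bool :=
  all (fun hc => K <= strip hc) (thalf e).

Lemma strip_thalf e hc : valid_tile e -> hc \in thalf e ->
  cdiag e.1 + 1 <= strip hc <= cdiag e.1 + (size e.2)%:Z.
Proof.
move=> v; case: hc => c b /(mem_thalf _ _ (valid_size v)) [k [hk ->]].
by rewrite /strip cdiag_tcell /=; case: b hk; lia.
Qed.

Lemma left_tileE K e : valid_tile e ->
  left_tile K e = (cdiag e.1 + (size e.2)%:Z + 1 <= K).
Proof.
move=> v; apply/allP/idP => [/(_ _ (last_in v))|h hc /(strip_thalf v)].
  by rewrite /strip /= lastc_cdiag; lia.
by lia.
Qed.

Lemma right_tileE K e : valid_tile e -> right_tile K e = (K <= cdiag e.1 + 1).
Proof.
move=> v; apply/allP/idP => [/(_ _ (first_in v))|h hc /(strip_thalf v)] //.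
by lia.
Qed.

Lemma left_tile_shift K e : left_tile K (shift_tile e) = left_tile K e.
Proof. by rewrite /left_tile thalf_shift all_map; apply: eq_all => -[c b]; rewrite /= strip_shiftc. Qed.

Lemma right_tile_shift K e : right_tile K (shift_tile e) = right_tile K e.
Proof. by rewrite /right_tile thalf_shift all_map; apply: eq_all => -[c b]; rewrite /= strip_shiftc. Qed.

Definition splits (K : int) (g : tile) (oL oR : option tile) : Prop :=
  match oL, oR with
  | Some e1, Some e2 => [/\ valid_tile e1, valid_tile e2, left_tile K e1, right_tile K e2 &
                          e2.1 = lastc e1 /\ g = glue e1 e2]
  | Some e1, None => [/\ valid_tile e1, left_tile K e1 & g = e1]
  | None, Some e2 => [/\ valid_tile e2, right_tile K e2 & g = e2]
  | None, None => False
  end.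

Definition ohalf (o : option tile) : seq halfcell := if o is Some e then thalf e else [::].

Section Splits.
Variables (K : int) (g : tile).

Lemma splits_valid oL oR : splits K g oL oR -> valid_tile g.
Proof.
case: oL oR => [e1|] [e2|] //=; last by case=> ? ? ->.
  by case=> ???? [? ->]; exact: glue_valid.
by case=> ? ? ->.
Qed.

Lemma splits_thalf oL oR hc : splits K g oL oR ->
  (hc \in thalf g) = (hc \in ohalf oL) || (hc \in ohalf oR).
Proof.
case: oL oR => [e1|] [e2|] //=; last by case=> _ _ ->.
  by case=> v1 v2 _ _ [E ->]; apply: mem_thalf_glue => //; exact: valid_size.
by case=> _ _ ->; rewrite orbF.
Qed.

Lemma splits_ohalfL oL oR hc : splits K g oL oR -> hc \in ohalf oL -> strip hc + 1 <= K.
Proof. by case: oL oR => [e1|] [e2|] //=; [case=> _ _ /allP L _ _|case=> _ /allP L _]; exact: L. Qed.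

Lemma splits_ohalfR oL oR hc : splits K g oL oR -> hc \in ohalf oR -> K <= strip hc.
Proof. by case: oL oR => [e1|] [e2|] //=; [case=> _ _ _ /allP L _|case=> _ /allP L _]; exact: L. Qed.

Lemma splits_left oL oR hc : splits K g oL oR -> hc \in thalf g ->
  strip hc + 1 <= K -> hc \in ohalf oL.
Proof. by move=> D; rewrite (splits_thalf _ D) => /orP [] // /(splits_ohalfR D); lia. Qed.

Lemma splits_right oL oR hc : splits K g oL oR -> hc \in thalf g ->
  K <= strip hc -> hc \in ohalf oR.
Proof. by move=> D; rewrite (splits_thalf _ D) => /orP [] // /(splits_ohalfL D); lia. Qed.

Lemma splits_inL e1 oR hc : splits K g (Some e1) oR -> hc \in thalf e1 -> hc \in thalf g.
Proof. by move=> D h; rewrite (splits_thalf _ D) /= h. Qed.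

Lemma splits_inR oL e2 hc : splits K g oL (Some e2) -> hc \in thalf e2 -> hc \in thalf g.
Proof. by move=> D h; rewrite (splits_thalf _ D) /= h orbT. Qed.

Lemma splits_pieceL e1 oR : splits K g (Some e1) oR -> valid_tile e1 /\ left_tile K e1.
Proof. by case: oR => [e2|]; case. Qed.

Lemma splits_pieceR oL e2 : splits K g oL (Some e2) -> valid_tile e2 /\ right_tile K e2.
Proof. by case: oL => [e1|]; case. Qed.

Lemma splits_link e1 e2 : splits K g (Some e1) (Some e2) -> e2.1 = lastc e1.
Proof. by case=> ????[]. Qed.

Lemma splits_both e1 e2 : splits K g (Some e1) (Some e2) ->
  [/\ g.1 = e1.1, g.2 = e1.2 ++ e2.2, cdiag g.1 + (size e1.2)%:Z + 1 = K,
      (0 < size e1.2)%N & (0 < size e2.2)%N].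
Proof.
case=> v1 v2 l1 r2 [E ->]; rewrite (left_tileE _ v1) in l1.
rewrite (right_tileE _ v2) E lastc_cdiag in r2.
by split=> //; [rewrite /glue /=; lia | exact: valid_size | exact: valid_size].
Qed.

Lemma splits_onlyL e1 : splits K g (Some e1) None ->
  g = e1 /\ cdiag g.1 + (size g.2)%:Z + 1 <= K.
Proof. by case=> v1 l1 ->; rewrite (left_tileE _ v1) in l1. Qed.

Lemma splits_onlyR e2 : splits K g None (Some e2) -> g = e2 /\ K <= cdiag g.1 + 1.
Proof. by case=> v1 l1 ->; rewrite (right_tileE _ v1) in l1. Qed.

Lemma splits_uniq oL oR oL' oR' : splits K g oL oR -> splits K g oL' oR' ->
  oL = oL' /\ oR = oR'.
Proof.
have nonempty oL1 oR1 : splits K g oL1 oR1 -> (0 < size g.2)%N.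
  by move/splits_valid/valid_size.
case: oL oR oL' oR' => [e1|] [e2|] [e1'|] [e2'|] //.
- move=> D D'; have [h1 h2 h3 s1 s2] := splits_both D.
  have [h1' h2' h3' s1' s2'] := splits_both D'.
  have Es : size e1.2 = size e1'.2 by lia.
  move: h2'; rewrite h2 => /eqP; rewrite eqseq_cat; last exact: Es.
  case/andP => /eqP w1 /eqP w2.
  have E1 : e1 = e1' by apply: tile_eq => //; rewrite -h1 -h1'.
  subst e1'; split=> //; congr Some; apply: tile_eq => //.
  by rewrite (splits_link D) (splits_link D').
- by move=> /splits_both [_ h2 h3 _ s2] /splits_onlyL [_]; rewrite h2 size_cat; lia.
- by move=> /splits_both [_ _ h3 s1 _] /splits_onlyR [_]; lia.
- by move=> /splits_onlyL [_ h] /splits_both [_ h2 h3 _ s2]; rewrite h2 size_cat in h; lia.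
- by move=> /splits_onlyL [E _] /splits_onlyL [E' _]; rewrite -E -E'.
- by move=> D /splits_onlyR [_ h']; have [_ h] := splits_onlyL D; have := nonempty _ _ D; lia.
- by move=> /splits_onlyR [_ h] /splits_both [_ _ h3 s1 _]; lia.
- by move=> D /splits_onlyL [_ h']; have [_ h] := splits_onlyR D; have := nonempty _ _ D; lia.
- by move=> /splits_onlyR [E _] /splits_onlyR [E' _]; rewrite -E -E'.
Qed.

Lemma splits_border e1 e2 : splits K g (Some e1) (Some e2) -> cdiag (lastc e1) = K - 1.
Proof. by move=> /splits_both [h1 _ h3 _ _]; rewrite lastc_cdiag -h1 -h3 addrK. Qed.

Lemma splits_firstL e1 oR : splits K g (Some e1) oR -> g.1 = e1.1.
Proof. by case: oR => [e2|]; [case=> ????[_ ->] | case=> ?? ->]. Qed.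

Lemma splits_lastR oL e2 : splits K g oL (Some e2) -> lastc g = lastc e2.
Proof. by case: oL => [e1|]; [case=> ????[E ->]; rewrite glue_lastc | case=> ?? ->]. Qed.

Lemma splits_lastL e1 oR : splits K g (Some e1) oR ->
  lastc g = lastc e1 \/ cdiag (lastc e1) = K - 1.
Proof.
case: oR => [e2|] D; last by case: D => ?? ->; left.
by right; exact: splits_border D.
Qed.

Lemma splits_firstR oL e2 : splits K g oL (Some e2) ->
  g.1 = e2.1 \/ cdiag e2.1 = K - 1.
Proof.
case: oL => [e1|] D; last by case: D => ?? ->; left.
by right; rewrite (splits_link D); exact: splits_border D.
Qed.

Lemma splits_ends oL oR c : splits K g oL oR -> (c = g.1 \/ c = lastc g) ->
  (exists e1, oL = Some e1 /\ (c = e1.1 \/ (c = lastc e1 /\ oR = None))) \/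
  (exists e2, oR = Some e2 /\ (c = lastc e2 \/ (c = e2.1 /\ oL = None))).
Proof.
case: oL oR => [e1|] [e2|] //.
- move=> D [] ->.
  + by left; exists e1; split=> //; left; rewrite (splits_firstL D).
  + by right; exists e2; split=> //; left; rewrite (splits_lastR D).
- by case=> _ _ -> [] ->; left; exists e1; split=> //; [left|right].
- by case=> _ _ -> [] ->; right; exists e2; split=> //; [right|left].
Qed.

End Splits.

Lemma splits_fun K g g' oL oR : splits K g oL oR -> splits K g' oL oR -> g = g'.
Proof.
case: oL oR => [e1|] [e2|] //.
- by case=> ???? [_ ->] [????[_ ->]].
- by case=> ?? -> [?? ->].
- by case=> ?? -> [?? ->].
Qed.

Lemma splits_shift K g oL oR : splits K g oL oR ->
  splits K (shift_tile g) (omap shift_tile oL) (omap shift_tile oR).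
Proof.
case: oL oR => [e1|] [e2|] //=.
- case=> v1 v2 l1 r2 [E ->]; split; rewrite ?left_tile_shift ?right_tile_shift //.
  by rewrite lastc_shift -E.
- by case=> v1 l1 ->; split; rewrite ?left_tile_shift.
- by case=> v1 l1 ->; split; rewrite ?right_tile_shift.
Qed.

Lemma left_tile_first K e : valid_tile e -> left_tile K e -> cdiag e.1 + 2 <= K.
Proof. by move=> v; rewrite (left_tileE _ v); have := valid_size v; lia. Qed.

Lemma right_tile_last K e : valid_tile e -> right_tile K e -> K <= cdiag (lastc e).
Proof. by move=> v; rewrite (right_tileE _ v) lastc_cdiag; have := valid_size v; lia. Qed.

Lemma last_of_left K f x : valid_tile f -> left_tile K f -> (x, false) \in thalf f ->
  cdiag x = K - 1 -> x = lastc f.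
Proof.
move=> v l; case/(mem_thalf _ _ (valid_size v)) => j [hj ->] hc.
case: (ltnP j (size f.2)) => hj2; last by rewrite /lastc; congr tcell; lia.
by have := in_thalfNE v hj2; move/allP: l => l /l; rewrite /strip /=; lia.
Qed.

Lemma first_of_right K f x : valid_tile f -> right_tile K f -> (x, true) \in thalf f ->
  cdiag x = K - 1 -> x = f.1.
Proof.
move=> v l; case/(mem_thalf _ _ (valid_size v)) => j [hj ->] hc.
case: j hj hc => [|j] hj hc; first by rewrite tcell0.
have hj' : (0 < j.+1 <= size f.2)%N by lia.
by have := in_thalfSW v hj'; move/allP: l => l /l; rewrite /strip /=; lia.
Qed.

Lemma splits_endL K g e1 oR c : splits K g (Some e1) oR -> (c = e1.1 \/ c = lastc e1) ->
  (c = g.1 \/ c = lastc g) \/ (c = lastc e1 /\ cdiag c = K - 1).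
Proof.
move=> D [] ->; first by left; left; rewrite (splits_firstL D).
by case: (splits_lastL D) => [<-|]; [left; right | right].
Qed.

Lemma splits_endR K g oL e2 c : splits K g oL (Some e2) -> (c = e2.1 \/ c = lastc e2) ->
  (c = g.1 \/ c = lastc g) \/ (c = e2.1 /\ cdiag c = K - 1).
Proof.
move=> D [] ->; last by left; right; rewrite (splits_lastR D).
by case: (splits_firstR D) => [<-|]; [left; left | right].
Qed.

Lemma left_end_on_border K e c : valid_tile e -> left_tile K e ->
  (c = e.1 \/ c = lastc e) -> cdiag c = K - 1 -> c = lastc e.
Proof. by move=> v l [] // ->; have := left_tile_first v l; lia. Qed.

Lemma right_end_on_border K e c : valid_tile e -> right_tile K e ->
  (c = e.1 \/ c = lastc e) -> cdiag c = K - 1 -> c = e.1.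
Proof. by move=> v r [] // ->; have := right_tile_last v r; lia. Qed.

Lemma left_right_shared_end K e1 e2 c : valid_tile e1 -> left_tile K e1 ->
  valid_tile e2 -> right_tile K e2 ->
  (c = e1.1 \/ c = lastc e1) -> (c = e2.1 \/ c = lastc e2) ->
  [/\ c = lastc e1, c != e1.1, c = e2.1 & c != lastc e2].
Proof.
move=> v1 l1 v2 r2 Hc1 Hc2.
have bL1 := left_tile_first v1 l1; have bR2 := right_tile_last v2 r2.
move: (l1) (r2); rewrite (left_tileE _ v1) (right_tileE _ v2) => bL2 bR1.
have := lastc_cdiag e1; have := valid_size v1; have := valid_size v2.
case: Hc1 => Ec; case: Hc2 => Ec'; move: (congr1 cdiag Ec) (congr1 cdiag Ec') => c1 c2;
  try lia.
by move=> *; split=> //; apply/eqP => E; move: (congr1 cdiag E); lia.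
Qed.

Definition oin (o : option tile) (S : seq tile) : Prop :=
  if o is Some e then e \in S else True.

Definition pieces (K : int) (T T1 T2 : seq tile) : Prop :=
  [/\ forall g, g \in T -> exists oL oR, [/\ splits K g oL oR, oin oL T1 & oin oR T2],
      forall e1, e1 \in T1 -> exists2 g, g \in T & exists oR, splits K g (Some e1) oR /\ oin oR T2
    & forall e2, e2 \in T2 -> exists2 g, g \in T & exists oL, splits K g oL (Some e2) /\ oin oL T1].

Definition adjacent_glued (K : int) (T T1 T2 : seq tile) : Prop :=
  forall e1 e2, e1 \in T1 -> e2 \in T2 -> e2.1 = lastc e1 ->
  exists2 g, g \in T & splits K g (Some e1) (Some e2).

Definition pieces_inj (K : int) (T : seq tile) : Prop :=
  (forall g g' e1 oR oR', g \in T -> g' \in T ->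
     splits K g (Some e1) oR -> splits K g' (Some e1) oR' -> g = g') /\
  (forall g g' e2 oL oL', g \in T -> g' \in T ->
     splits K g oL (Some e2) -> splits K g' oL' (Some e2) -> g = g').

Lemma pieces_mem K T T1 T2 T' T1' T2' : T =i T' -> T1 =i T1' -> T2 =i T2' ->
  pieces K T T1 T2 -> pieces K T' T1' T2'.
Proof.
move=> E E1 E2 [C1 C2 C3].
have oin1 o : oin o T1 -> oin o T1' by case: o => //= e; rewrite E1.
have oin2 o : oin o T2 -> oin o T2' by case: o => //= e; rewrite E2.
split.
- move=> g; rewrite -E => /C1 [oL [oR [D i1 i2]]].
  by exists oL, oR; split; [|exact: oin1|exact: oin2].
- move=> e1; rewrite -E1 => /C2 [g gT [oR [D i2]]].
  by exists g; [rewrite -E | exists oR; split; [|exact: oin2]].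
- move=> e2; rewrite -E2 => /C3 [g gT [oL [D i1]]].
  by exists g; [rewrite -E | exists oL; split; [|exact: oin1]].
Qed.

Lemma adjacent_glued_mem K T T1 T2 T' T1' T2' : T =i T' -> T1 =i T1' -> T2 =i T2' ->
  adjacent_glued K T T1 T2 -> adjacent_glued K T' T1' T2'.
Proof.
move=> E E1 E2 M e1 e2; rewrite -E1 -E2 => h1 h2 h.
by have [g gT D] := M e1 e2 h1 h2 h; exists g; rewrite -?E.
Qed.

Lemma pieces_sub K T T' T1 T2 :
  pieces K T T1 T2 -> pieces K T' T1 T2 ->
  adjacent_glued K T T1 T2 -> adjacent_glued K T' T1 T2 ->
  pieces_inj K T -> pieces_inj K T' -> {subset T <= T'}.
Proof.
move=> [C1 _ _] [_ C2' C3'] M M' [IL IR] [IL' _] g gT.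
have [oL [oR [D i1 i2]]] := C1 g gT.
have glued e1 e2 g1 oR1 : e1 \in T1 -> e2 \in T2 -> e2.1 = lastc e1 ->
    g1 \in T' -> splits K g1 (Some e1) oR1 -> oR1 = Some e2.
  move=> i1' i2' Ec g1T D1; have [h hT Dh] := M' e1 e2 i1' i2' Ec.
  by have Eg := IL' _ _ _ _ _ g1T hT D1 Dh; rewrite Eg in D1; case: (splits_uniq D1 Dh).
case: oL D i1 => [e1|] D i1.
- have [g' g'T [oR' [D' i2']]] := C2' e1 i1.
  suff E : oR = oR' by rewrite -E in D'; rewrite (splits_fun D D').
  case: oR D i2 => [e2|] D i2; first by rewrite (glued _ _ _ _ i1 i2 (splits_link D) g'T D').
  case: oR' D' i2' => [e2'|] // D' i2'.
  have [h hT Dh] := M e1 e2' i1 i2' (splits_link D').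
  by have Eg := IL _ _ _ _ _ gT hT D Dh; rewrite Eg in D; case: (splits_uniq D Dh).
- case: oR D i2 => [e2|] // D i2.
  have [g' g'T [oL' [D' i1']]] := C3' e2 i2.
  suff E : oL' = None by rewrite E in D'; rewrite (splits_fun D D').
  case: oL' D' i1' => [e1'|] // D' i1'.
  have [h hT Dh] := M e1' e2 i1' i2 (splits_link D').
  by have Eg := IR _ _ _ _ _ gT hT D Dh; rewrite Eg in D; case: (splits_uniq D Dh).
Qed.

Lemma pieces_determined K T T1 T2 T1' T2' :
  pieces K T T1 T2 -> pieces K T T1' T2' -> {subset T1 <= T1'} /\ {subset T2 <= T2'}.
Proof.
move=> [_ C2 C3] [C1' _ _]; split.
- move=> e1 /C2 [g gT [oR [D _]]]; have [oL' [oR' [D' i1 _]]] := C1' g gT.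
  by case: (splits_uniq D D') => E _; rewrite -E in i1.
- move=> e2 /C3 [g gT [oL [D _]]]; have [oL' [oR' [D' _ i2]]] := C1' g gT.
  by case: (splits_uniq D D') => _ E; rewrite -E in i2.
Qed.

Definition leftR (R : halfcell -> bool) (K : int) (hc : halfcell) : bool :=
  R hc && (strip hc + 1 <= K).
Definition rightR (R : halfcell -> bool) (K : int) (hc : halfcell) : bool :=
  R hc && (K <= strip hc).

Lemma tiling_left_tile R K T e : tiling (leftR R K) T -> e \in T -> left_tile K e.
Proof. by move=> H eT; apply/allP => hc /(tiling_in H eT) /andP []. Qed.

Lemma tiling_right_tile R K T e : tiling (rightR R K) T -> e \in T -> right_tile K e.
Proof. by move=> H eT; apply/allP => hc /(tiling_in H eT) /andP []. Qed.

(* In a tiling, a piece (sharing its first half cell with its tile) belongs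
   to a single tile. *)
Lemma tiling_pieces_inj R K T : tiling R T -> pieces_inj K T.
Proof.
move=> HT; split.
- move=> g g' e1 oR oR' gT g'T D D'; have [v _] := splits_pieceL D.
  exact: (tiling_disj HT gT g'T (splits_inL D (first_in v)) (splits_inL D' (first_in v))).
- move=> g g' e2 oL oL' gT g'T D D'; have [v _] := splits_pieceR D.
  exact: (tiling_disj HT gT g'T (splits_inR D (first_in v)) (splits_inR D' (first_in v))).
Qed.

Section PiecesOfTiling.
Variables (R : halfcell -> bool) (K : int) (T T1 T2 : seq tile).
Hypothesis T_pieces : pieces K T T1 T2.
Hypothesis T_tiling : tiling R T.

Lemma left_pieces_cond_i : forall e : tile, e \in T1 ->
  has (leftR R K) (thalf (shift_tile e)) ->
  exists2 f : tile, f \in T1 & (f != e) && all (fun c => c \in thalf f) (thalf (shift_tile e)).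
Proof.
have [C1 C2 _] := T_pieces; have [_ [_ [_ [cond_i _]]]] := T_tiling.
move=> e1 e1T; have [g gT [oR [D _]]] := C2 _ e1T.
case/hasP => hc Hs /andP [Rhc Lhc]; have Ds := splits_shift D.
have Hg : hc \in thalf (shift_tile g) := splits_inL Ds Hs.
have hasR : has R (thalf (shift_tile g)) by apply/hasP; exists hc.
have [f fT /andP [nf /allP Hf]] := cond_i g gT hasR.
have [oL' [oR' [D' i1 _]]] := C1 f fT.
have := splits_left D' (Hf hc Hg) Lhc; case: oL' D' i1 => [f1|] D' i1 // hcf1.
exists f1 => //; apply/andP; split.
  apply: contraNneq nf => E; rewrite E in hcf1.
  by rewrite (tiling_disj T_tiling gT fT (splits_inL D hcf1) (Hf hc Hg)).
apply/allP => hc' Hs'; have Hg' := splits_inL Ds Hs'.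
exact: splits_left D' (Hf _ Hg') (splits_ohalfL Ds (Hs' : hc' \in ohalf (Some _))).
Qed.

Lemma right_pieces_cond_i : forall e : tile, e \in T2 ->
  has (rightR R K) (thalf (shift_tile e)) ->
  exists2 f : tile, f \in T2 & (f != e) && all (fun c => c \in thalf f) (thalf (shift_tile e)).
Proof.
have [C1 _ C3] := T_pieces; have [_ [_ [_ [cond_i _]]]] := T_tiling.
move=> e2 e2T; have [g gT [oL [D _]]] := C3 _ e2T.
case/hasP => hc Hs /andP [Rhc Lhc]; have Ds := splits_shift D.
have Hg : hc \in thalf (shift_tile g) := splits_inR Ds Hs.
have hasR : has R (thalf (shift_tile g)) by apply/hasP; exists hc.
have [f fT /andP [nf /allP Hf]] := cond_i g gT hasR.
have [oL' [oR' [D' _ i2]]] := C1 f fT.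
have := splits_right D' (Hf hc Hg) Lhc; case: oR' D' i2 => [f2|] D' i2 // hcf2.
exists f2 => //; apply/andP; split.
  apply: contraNneq nf => E; rewrite E in hcf2.
  by rewrite (tiling_disj T_tiling gT fT (splits_inR D hcf2) (Hf hc Hg)).
apply/allP => hc' Hs'; have Hg' := splits_inR Ds Hs'.
exact: splits_right D' (Hf _ Hg') (splits_ohalfR Ds (Hs' : hc' \in ohalf (Some _))).
Qed.

(* Two pieces sharing an end cell come from tiles sharing an end cell or
   a half cell, hence from the same tile. *)
Lemma left_pieces_cond_ii : forall e f : tile, e \in T1 -> f \in T1 -> e != f ->
  ~~ has (fun d => d \in diags f) (diags e).
Proof.
have [_ C2 _] := T_pieces.
move=> e1 f1 /C2 [g gT [oR [D _]]] /C2 [g' g'T [oR' [D' _]]].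
apply: contra_neqN => /has_diags [c [He Hf]].
have [v1 l1] := splits_pieceL D; have [v1' l1'] := splits_pieceL D'.
suff Eg : g = g' by rewrite -Eg in D'; case: (splits_uniq D D') => [[]].
have shared_last : c = lastc e1 -> c = lastc f1 -> g = g'.
  move=> Ec Ec'; apply: (tiling_disj T_tiling gT g'T (hc := (c, false))).
    by apply: (splits_inL D); rewrite Ec; apply: last_in.
  by apply: (splits_inL D'); rewrite Ec'; apply: last_in.
case: (splits_endL D He) => [Hg|[Ec Kc]]; case: (splits_endL D' Hf) => [Hg'|[Ec' Kc']].
- exact: tiling_diag T_tiling gT g'T Hg Hg'.
- exact: shared_last (left_end_on_border v1 l1 He Kc') Ec'.
- exact: shared_last Ec (left_end_on_border v1' l1' Hf Kc).
- exact: shared_last Ec Ec'.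
Qed.

Lemma right_pieces_cond_ii : forall e f : tile, e \in T2 -> f \in T2 -> e != f ->
  ~~ has (fun d => d \in diags f) (diags e).
Proof.
have [_ _ C3] := T_pieces.
move=> e2 f2 /C3 [g gT [oL [D _]]] /C3 [g' g'T [oL' [D' _]]].
apply: contra_neqN => /has_diags [c [He Hf]].
have [v2 r2] := splits_pieceR D; have [v2' r2'] := splits_pieceR D'.
suff Eg : g = g' by rewrite -Eg in D'; case: (splits_uniq D D') => _ [].
have shared_first : c = e2.1 -> c = f2.1 -> g = g'.
  move=> Ec Ec'; apply: (tiling_disj T_tiling gT g'T (hc := (c, true))).
    by apply: (splits_inR D); rewrite Ec; apply: first_in.
  by apply: (splits_inR D'); rewrite Ec'; apply: first_in.
case: (splits_endR D He) => [Hg|[Ec Kc]]; case: (splits_endR D' Hf) => [Hg'|[Ec' Kc']].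
- exact: tiling_diag T_tiling gT g'T Hg Hg'.
- exact: shared_first (right_end_on_border v2 r2 He Kc') Ec'.
- exact: shared_first Ec (right_end_on_border v2' r2' Hf Kc).
- exact: shared_first Ec Ec'.
Qed.

Lemma tiling_left_pieces : tiling (leftR R K) T1.
Proof.
have [_ C2 _] := T_pieces.
split; [|split; [|split; [|split]]]; last 2 first.
- exact: left_pieces_cond_i.
- exact: left_pieces_cond_ii.
- by move=> e1 /C2 [g gT [oR [D _]]]; exact: (splits_pieceL D).1.
- move=> e1 /C2 [g gT [oR [D _]]]; apply/allP => hc H.
  rewrite /leftR (tiling_in T_tiling gT (splits_inL D H)) /=.
  by have [_ /allP] := splits_pieceL D; apply.
- move=> e1 f1 /C2 [g gT [oR [D _]]] /C2 [g' g'T [oR' [D' _]]].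
  apply: contra_neqN => /hasP [hc H H'].
  have Eg := tiling_disj T_tiling gT g'T (splits_inL D H) (splits_inL D' H').
  rewrite -Eg in D'.
  by case: (splits_uniq D D') => [[]].
Qed.

Lemma tiling_right_pieces : tiling (rightR R K) T2.
Proof.
have [_ _ C3] := T_pieces.
split; [|split; [|split; [|split]]]; last 2 first.
- exact: right_pieces_cond_i.
- exact: right_pieces_cond_ii.
- by move=> e2 /C3 [g gT [oL [D _]]]; exact: (splits_pieceR D).1.
- move=> e2 /C3 [g gT [oL [D _]]]; apply/allP => hc H.
  rewrite /rightR (tiling_in T_tiling gT (splits_inR D H)) /=.
  by have [_ /allP] := splits_pieceR D; apply.
- move=> e2 f2 /C3 [g gT [oL [D _]]] /C3 [g' g'T [oL' [D' _]]].
  apply: contra_neqN => /hasP [hc H H'].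
  have Eg := tiling_disj T_tiling gT g'T (splits_inR D H) (splits_inR D' H').
  rewrite -Eg in D'.
  by case: (splits_uniq D D') => _ [].
Qed.

Lemma tiling_adjacent_glued : adjacent_glued K T T1 T2.
Proof.
have [_ C2 C3] := T_pieces; have [IL _] := tiling_pieces_inj K T_tiling.
have H1 := tiling_left_pieces; have H2 := tiling_right_pieces.
move=> e1 e2 e1T e2T E.
have v1 := tiling_valid H1 e1T; have v2 := tiling_valid H2 e2T.
have [g gT [oR [D i2]]] := C2 _ e1T.
case: oR D i2 => [e2'|] D i2.
  suff -> : e2 = e2' by exists g.
  apply: (tiling_disj H2 e2T i2 (first_in v2)).
  by rewrite E -(splits_link D); apply/first_in/(tiling_valid H2 i2).
have [g' g'T [oL' [D' i1']]] := C3 _ e2T.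
case: oL' D' i1' => [e1'|] D' i1'.
  have E1 : e1 = e1'.
    apply: (tiling_disj H1 e1T i1' (last_in v1)).
    by rewrite -E (splits_link D'); apply/last_in/(tiling_valid H1 i1').
  rewrite -E1 in D'; have Eg := IL _ _ _ _ _ gT g'T D D'; rewrite Eg in D.
  by case: (splits_uniq D D').
have Eg : g = g'.
  apply: (tiling_diag T_tiling gT g'T (c := lastc e1)).
    by right; case: D => ?? ->.
  by left; case: D' => ?? ->.
by rewrite Eg in D; case: (splits_uniq D D').
Qed.

End PiecesOfTiling.

Section TilingFromPieces.
Variables (lam mu : seq bool) (a K : nat) (T T1 T2 : seq tile).
Let R := hc_in lam mu a.
Hypothesis lam_returns : hgt lam K = 0.
Hypothesis T_pieces : pieces K%:Z T T1 T2.
Hypothesis T_glued : adjacent_glued K%:Z T T1 T2.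
Hypothesis T_inj : pieces_inj K%:Z T.
Hypothesis T1_tiling : tiling (leftR R K%:Z) T1.
Hypothesis T2_tiling : tiling (rightR R K%:Z) T2.

Let covers (f e : tile) := all (fun c => c \in thalf f) (thalf (shift_tile e)).

Lemma cover_both g e1 e2 f1 f2 : g \in T -> splits K%:Z g (Some e1) (Some e2) ->
  f1 \in T1 -> f1 != e1 -> covers f1 e1 -> f2 \in T2 -> covers f2 e2 ->
  exists2 f, f \in T & (f != g) && covers f g.
Proof.
move=> gT D f1T nf1 /allP Hf1 f2T /allP Hf2; have Ds := splits_shift D.
have [v1 _] := splits_pieceL D; have [v2 _] := splits_pieceR D.
have Ec : e2.1 = lastc e1 := splits_link D.
have hcK : cdiag (shiftc (lastc e1)) = K%:Z - 1 by rewrite cdiag_shiftc (splits_border D).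
have s1 := in_shift (last_in v1).
have s2 : (shiftc (lastc e1), true) \in thalf (shift_tile e2) by rewrite -Ec; exact/in_shift/first_in.
have E1 := last_of_left (tiling_valid T1_tiling f1T) (tiling_left_tile T1_tiling f1T) (Hf1 _ s1) hcK.
have E2 := first_of_right (tiling_valid T2_tiling f2T) (tiling_right_tile T2_tiling f2T) (Hf2 _ s2) hcK.
have [f fT Df] := T_glued f1T f2T (etrans (esym E2) E1).
exists f => //; apply/andP; split.
  by apply: contraNneq nf1 => Ef; rewrite Ef in Df; case: (splits_uniq Df D) => [[->]].
apply/allP => hc; rewrite (splits_thalf _ Ds) => /orP [] h.
  exact: splits_inL Df (Hf1 _ h).
exact: splits_inR Df (Hf2 _ h).
Qed.

Lemma cover_left g e1 f1 : g \in T -> splits K%:Z g (Some e1) None ->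
  f1 \in T1 -> f1 != e1 -> covers f1 e1 -> exists2 f, f \in T & (f != g) && covers f g.
Proof.
have [_ C2 _] := T_pieces.
move=> gT D f1T nf1 /allP Hf1; have Ds := splits_shift D.
have [f fT [oRf [Df _]]] := C2 f1 f1T; exists f => //; apply/andP; split.
  by apply: contraNneq nf1 => Ef; rewrite Ef in Df; case: (splits_uniq Df D) => [[->]].
by apply/allP => hc; rewrite (splits_thalf _ Ds) orbF => h; exact: splits_inL Df (Hf1 _ h).
Qed.

Lemma cover_right g e2 f2 : g \in T -> splits K%:Z g None (Some e2) ->
  f2 \in T2 -> f2 != e2 -> covers f2 e2 -> exists2 f, f \in T & (f != g) && covers f g.
Proof.
have [_ _ C3] := T_pieces.
move=> gT D f2T nf2 /allP Hf2; have Ds := splits_shift D.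
have [f fT [oLf [Df _]]] := C3 f2 f2T; exists f => //; apply/andP; split.
  by apply: contraNneq nf2 => Ef; rewrite Ef in Df; case: (splits_uniq Df D) => _ [->].
by apply/allP => hc; rewrite (splits_thalf _ Ds) => h; exact: splits_inR Df (Hf2 _ h).
Qed.

(* At the junction of two pieces the region is locally convex: if the shift
   of the left piece is covered, the shift of the right piece meets the
   right part of the region, and vice versa. *)
Lemma cover_crosses_right g e1 e2 f1 : splits K%:Z g (Some e1) (Some e2) ->
  e2 \in T2 -> f1 \in T1 -> covers f1 e1 -> has (rightR R K%:Z) (thalf (shift_tile e2)).
Proof.
move=> D i2 f1T Hf1; have hcK := splits_border D.
have [v1 _] := splits_pieceL D; have [v2 _] := splits_pieceR D.
have Rs1 : R (shiftc (lastc e1), false).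
  by case/andP: (tiling_in T1_tiling f1T (allP Hf1 _ (in_shift (last_in v1)))).
have Rc : R (lastc e1, true).
  by rewrite -(splits_link D); case/andP: (tiling_in T2_tiling i2 (first_in v2)).
apply/hasP; exists (shiftc (lastc e1), true).
  by rewrite -(splits_link D); exact/in_shift/first_in.
apply/andP; split; first exact (fill_NE_at_return lam_returns hcK Rs1 Rc).
by rewrite strip_shiftc /strip /= hcK subrK.
Qed.

Lemma cover_crosses_left g e1 e2 f2 : splits K%:Z g (Some e1) (Some e2) ->
  e1 \in T1 -> f2 \in T2 -> covers f2 e2 -> has (leftR R K%:Z) (thalf (shift_tile e1)).
Proof.
move=> D i1 f2T Hf2; have hcK := splits_border D.
have [v1 _] := splits_pieceL D; have [v2 _] := splits_pieceR D.
have s2 : (shiftc (lastc e1), true) \in thalf (shift_tile e2).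
  by rewrite -(splits_link D); exact/in_shift/first_in.
have Rs2 : R (shiftc (lastc e1), true).
  by case/andP: (tiling_in T2_tiling f2T (allP Hf2 _ s2)).
have Rc : R (lastc e1, false) by case/andP: (tiling_in T1_tiling i1 (last_in v1)).
apply/hasP; exists (shiftc (lastc e1), false); first exact/in_shift/last_in.
apply/andP; split; first exact (fill_SW_at_return lam_returns hcK Rs2 Rc).
by rewrite strip_shiftc /strip /= hcK addr0 subrK.
Qed.

(* The shifted half cell lies on one side of K, where
   condition (i) for that side provides a covering piece; if g has a piece
   on the other side too, the previous lemmas let us apply condition (i)
   there as well. *)
Lemma glued_cond_i g : g \in T -> has R (thalf (shift_tile g)) ->
  exists2 f, f \in T & (f != g) && covers f g.
Proof.
have [C1 _ _] := T_pieces.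
have [_ [_ [_ [cond_i1 _]]]] := T1_tiling; have [_ [_ [_ [cond_i2 _]]]] := T2_tiling.
move=> gT /hasP [hc Hs Rhc]; have [oL [oR [D i1 i2]]] := C1 g gT.
have Ds := splits_shift D.
case: (leP (strip hc + 1) K%:Z) => side.
- have := splits_left Ds Hs side; case: oL D i1 Ds => [e1|] D i1 Ds //= hs1.
  have has1 : has (leftR R K%:Z) (thalf (shift_tile e1)).
    by apply/hasP; exists hc; rewrite // /leftR Rhc side.
  have [f1 f1T /andP [nf1 Hf1]] := cond_i1 e1 i1 has1.
  case: oR D i2 Ds => [e2|] D i2 Ds; last exact: cover_left gT D f1T nf1 Hf1.
  have [f2 f2T /andP [_ Hf2]] := cond_i2 e2 i2 (cover_crosses_right D i2 f1T Hf1).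
  exact: cover_both gT D f1T nf1 Hf1 f2T Hf2.
- have side' : K%:Z <= strip hc by lia.
  have := splits_right Ds Hs side'; case: oR D i2 Ds => [e2|] D i2 Ds //= hs2.
  have has2 : has (rightR R K%:Z) (thalf (shift_tile e2)).
    by apply/hasP; exists hc; rewrite // /rightR Rhc side'.
  have [f2 f2T /andP [nf2 Hf2]] := cond_i2 e2 i2 has2.
  case: oL D i1 Ds => [e1|] D i1 Ds; last exact: cover_right gT D f2T nf2 Hf2.
  have [f1 f1T /andP [nf1 Hf1]] := cond_i1 e1 i1 (cover_crosses_left D i1 f2T Hf2).
  exact: cover_both gT D f1T nf1 Hf1 f2T Hf2.
Qed.

(* Condition (ii).  A left piece and a right piece of two tiles can only
   share an end cell if they are adjacent single pieces, hence glued into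
   one tile. *)
Lemma mixed_end_shared (g g' e1 e2 : tile) oR oL c : g \in T -> g' \in T ->
  e1 \in T1 -> e2 \in T2 -> splits K%:Z g (Some e1) oR -> splits K%:Z g' oL (Some e2) ->
  (c = e1.1 \/ (c = lastc e1 /\ oR = None)) -> (c = lastc e2 \/ (c = e2.1 /\ oL = None)) ->
  g = g'.
Proof.
move=> gT g'T i1 i2 D D' Hc1 Hc2; have [IL _] := T_inj.
have [v1 l1] := splits_pieceL D; have [v2 r2] := splits_pieceR D'.
have End1 : c = e1.1 \/ c = lastc e1 by case: Hc1 => [|[]]; [left|right].
have End2 : c = e2.1 \/ c = lastc e2 by case: Hc2 => [|[]]; [right|left].
have [Ec nE1 Ec' nE2] := left_right_shared_end v1 l1 v2 r2 End1 End2.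
have EoR : oR = None by case: Hc1 => [E|[]//]; rewrite E eqxx in nE1.
have EoL : oL = None by case: Hc2 => [E|[]//]; rewrite E eqxx in nE2.
rewrite EoR in D; rewrite EoL in D'.
have [h hT Dh] := T_glued i1 i2 (etrans (esym Ec') Ec).
have Eg := IL _ _ _ _ _ gT hT D Dh; rewrite Eg in D.
by case: (splits_uniq D Dh).
Qed.

Lemma glued_cond_ii g g' : g \in T -> g' \in T -> g != g' ->
  ~~ has (fun d => d \in diags g') (diags g).
Proof.
have [C1 _ _] := T_pieces; have [IL IR] := T_inj.
move=> gT g'T; apply: contra_neqN => /has_diags [c [Hc Hc']].
have [oL [oR [D i1 i2]]] := C1 g gT; have [oL' [oR' [D' i1' i2']]] := C1 g' g'T.
case: (splits_ends D Hc) => [[e1 [EL Hx1]] | [e2 [ER Hx2]]];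
case: (splits_ends D' Hc') => [[e1' [EL' Hy1]] | [e2' [ER' Hy2]]];
  subst; rewrite /oin in i1 i2 i1' i2'.
- have End1 : c = e1.1 \/ c = lastc e1 by case: Hx1 => [|[]]; [left|right].
  have End1' : c = e1'.1 \/ c = lastc e1' by case: Hy1 => [|[]]; [left|right].
  rewrite (tiling_diag T1_tiling i1 i1' End1 End1') in D.
  exact: IL _ _ _ _ _ gT g'T D D'.
- exact: mixed_end_shared gT g'T i1 i2' D D' Hx1 Hy2.
- exact/esym/(mixed_end_shared g'T gT i1' i2 D' D Hy1 Hx2).
- have End2 : c = e2.1 \/ c = lastc e2 by case: Hx2 => [|[]]; [right|left].
  have End2' : c = e2'.1 \/ c = lastc e2' by case: Hy2 => [|[]]; [right|left].
  rewrite (tiling_diag T2_tiling i2 i2' End2 End2') in D.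
  exact: IR _ _ _ _ _ gT g'T D D'.
Qed.

Lemma tiling_of_pieces : tiling R T.
Proof.
have [C1 _ _] := T_pieces; have [IL IR] := T_inj.
split; [|split; [|split; [|split]]]; last 2 first.
- exact: glued_cond_i.
- exact: glued_cond_ii.
- by move=> g /C1 [oL [oR [D _ _]]]; exact: splits_valid D.
- move=> g /C1 [oL [oR [D i1 i2]]]; apply/allP => hc; rewrite (splits_thalf _ D) => /orP [].
  + by case: oL D i1 => [e1|] // D i1 H; case/andP: (tiling_in T1_tiling i1 H).
  + by case: oR D i2 => [e2|] // D i2 H; case/andP: (tiling_in T2_tiling i2 H).
- move=> g g' gT g'T; apply: contra_neqN => /hasP [hc H H'].
  have [oL [oR [D i1 i2]]] := C1 g gT; have [oL' [oR' [D' i1' i2']]] := C1 g' g'T.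
  case: (leP (strip hc + 1) K%:Z) => side.
  + move: (splits_left D H side) (splits_left D' H' side).
    case: oL D i1 => [e1|] D i1 //; case: oL' D' i1' => [e1'|] D' i1' //= h h'.
    rewrite (tiling_disj T1_tiling i1 i1' h h') in D; exact: IL gT g'T D D'.
  + have side' : K%:Z <= strip hc by lia.
    move: (splits_right D H side') (splits_right D' H' side').
    case: oR D i2 => [e2|] D i2 //; case: oR' D' i2' => [e2'|] D' i2' //= h h'.
    rewrite (tiling_disj T2_tiling i2 i2' h h') in D; exact: IR gT g'T D D'.
Qed.

End TilingFromPieces.

Definition cut_index (K : int) (e : tile) : nat := absz (K - cdiag e.1 - 1)%R.

Definition cutL (K : int) (e : tile) : option tile :=
  if cdiag e.1 + (size e.2)%:Z + 1 <= K then Some e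
  else if K <= cdiag e.1 + 1 then None else Some (tile_pre (cut_index K e) e).

Definition cutR (K : int) (e : tile) : option tile :=
  if K <= cdiag e.1 + 1 then Some e
  else if cdiag e.1 + (size e.2)%:Z + 1 <= K then None else Some (tile_suf (cut_index K e) e).

Lemma splits_cut K e : valid_tile e ->
  (cdiag e.1 + 1 < K -> K < cdiag e.1 + (size e.2)%:Z + 1 -> hgt e.2 (cut_index K e) = 0) ->
  splits K e (cutL K e) (cutR K e).
Proof.
move=> v Hz; rewrite /cutL /cutR.
case: (leP (cdiag e.1 + (size e.2)%:Z + 1) K) => h1.
  have -> : (K <= cdiag e.1 + 1) = false by apply/negbTE; rewrite -ltNge; have := valid_size v; lia.
  by split=> //; rewrite (left_tileE _ v).
case: (leP K (cdiag e.1 + 1)) => h2; first by split=> //; rewrite (right_tileE _ v).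
have hk0 : (0 < cut_index K e <= size e.2)%N by rewrite /cut_index; lia.
have hk1 : (cut_index K e < size e.2)%N by rewrite /cut_index; lia.
have hz := Hz h2 h1.
have vp := tile_pre_valid v hk0 hz.
have vs := tile_suf_valid v hk1 hz.
split=> //.
- by rewrite (left_tileE _ vp) tile_pre_size ?(ltnW hk1) //= /cut_index; lia.
- by rewrite (right_tileE _ vs) /tile_suf /= cdiag_tcell /cut_index; lia.
- by rewrite glue_pre_suf tile_suf_first // ltnW.
Qed.

Lemma pieces_cut K T : (forall e, e \in T -> splits K e (cutL K e) (cutR K e)) ->
  pieces K T (pmap (cutL K) T) (pmap (cutR K) T).
Proof.
move=> HD; have oin_pmap f g : g \in T -> oin (f g) (pmap f T).
  by case E: (f g) => [e|] //= gT; rewrite mem_pmap -E map_f.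
split.
- by move=> g gT; exists (cutL K g), (cutR K g); split; [exact: HD | exact: oin_pmap ..].
- move=> e1; rewrite mem_pmap => /mapP [g gT E]; exists g => //.
  by exists (cutR K g); rewrite E; split; [exact: HD | exact: oin_pmap].
- move=> e2; rewrite mem_pmap => /mapP [g gT E]; exists g => //.
  by exists (cutL K g); rewrite E; split; [exact: HD | exact: oin_pmap].
Qed.

Definition partner (T2 : seq tile) (e1 : tile) : option tile :=
  ohead [seq f <- T2 | f.1 == lastc e1].
Definition merge_left (T2 : seq tile) (e1 : tile) : tile :=
  if partner T2 e1 is Some f then glue e1 f else e1.
Definition unmatched (T1 : seq tile) (f : tile) : bool :=
  ~~ has (fun e => lastc e == f.1) T1.
Definition merge_tiles (T1 T2 : seq tile) : seq tile :=
  map (merge_left T2) T1 ++ [seq f <- T2 | unmatched T1 f].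

Lemma partnerP T2 e1 :
  (exists2 f, partner T2 e1 = Some f & f \in T2 /\ f.1 = lastc e1) \/
  (partner T2 e1 = None /\ forall f, f \in T2 -> f.1 <> lastc e1).
Proof.
have memF f : (f \in [seq f <- T2 | f.1 == lastc e1]) = (f \in T2) && (f.1 == lastc e1).
  by rewrite mem_filter andbC.
rewrite /partner; case E: [seq f <- T2 | f.1 == lastc e1] => [|f s] /=.
  by right; split=> // f fT Ef; move: (memF f); rewrite E fT Ef eqxx.
by left; exists f => //; move: (memF f); rewrite E mem_head => /esym/andP [-> /eqP].
Qed.

Lemma partner_some T2 e f : partner T2 e = Some f -> f \in T2 /\ f.1 = lastc e.
Proof. by case: (partnerP T2 e) => [[f' -> H] [<-]|[-> _]]. Qed.

Section Merge.
Variables (R : halfcell -> bool) (K : int) (T1 T2 : seq tile).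
Hypothesis T1_tiling : tiling (leftR R K) T1.
Hypothesis T2_tiling : tiling (rightR R K) T2.
Let T := merge_tiles T1 T2.

Lemma partner_eq e1 f : f \in T2 -> f.1 = lastc e1 -> partner T2 e1 = Some f.
Proof.
move=> fT Ef; case: (partnerP T2 e1) => [[f' -> [f'T Ef']]|[_ /(_ f fT)]] //.
congr Some; apply: (tiling_disj T2_tiling f'T fT (hc := (lastc e1, true))).
- by rewrite -Ef'; apply/first_in/(tiling_valid T2_tiling f'T).
- by rewrite -Ef; apply/first_in/(tiling_valid T2_tiling fT).
Qed.

Lemma splits_merge_left e1 : e1 \in T1 ->
  splits K (merge_left T2 e1) (Some e1) (partner T2 e1) /\ oin (partner T2 e1) T2.
Proof.
move=> e1T; have v1 := tiling_valid T1_tiling e1T; have l1 := tiling_left_tile T1_tiling e1T.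
rewrite /merge_left; case: (partnerP T2 e1) => [[f -> [fT Ef]]|[-> _]] //.
by do 2!split=> //; [exact: tiling_valid T2_tiling fT | exact: tiling_right_tile T2_tiling fT].
Qed.

Lemma splits_unmatched f : f \in T2 -> splits K f None (Some f).
Proof. by move=> fT; split=> //; [exact: tiling_valid T2_tiling fT | exact: tiling_right_tile T2_tiling fT]. Qed.

Lemma splits_merge g oL oR : g \in T -> splits K g oL oR ->
  (exists2 e1, e1 \in T1 & [/\ oL = Some e1, oR = partner T2 e1 & g = merge_left T2 e1]) \/
  [/\ oL = None, oR = Some g, g \in T2 & unmatched T1 g].
Proof.
rewrite mem_cat => /orP [/mapP [e1 e1T ->]|]; last rewrite mem_filter => /andP [u gT].
  by move=> D; left; exists e1 => //; case: (splits_uniq D (splits_merge_left e1T).1) => -> ->.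
by move=> D; right; case: (splits_uniq D (splits_unmatched gT)) => -> ->.
Qed.

Lemma merge_adjacent_glued : adjacent_glued K T T1 T2.
Proof.
move=> e1 e2 e1T e2T E; exists (merge_left T2 e1); first by rewrite mem_cat map_f.
by have [D _] := splits_merge_left e1T; rewrite (partner_eq e2T E) in D.
Qed.

Lemma merge_pieces : pieces K T T1 T2.
Proof.
split.
- move=> g; rewrite mem_cat => /orP [/mapP [e1 e1T ->]|]; last rewrite mem_filter => /andP [u gT].
    by have [D i] := splits_merge_left e1T; exists (Some e1), (partner T2 e1).
  by exists None, (Some g); split=> //; apply: splits_unmatched.
- move=> e1 e1T; exists (merge_left T2 e1); first by rewrite mem_cat map_f.
  by exists (partner T2 e1); exact: splits_merge_left.
- move=> e2 e2T; case U: (unmatched T1 e2).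
    exists e2; first by rewrite mem_cat mem_filter U e2T orbT.
    by exists None; split=> //; apply: splits_unmatched.
  move/negbFE: U => /hasP [e1 e1T /eqP E].
  have [g gT D] := merge_adjacent_glued e1T e2T (esym E).
  by exists g => //; exists (Some e1).
Qed.

Lemma merge_pieces_inj : pieces_inj K T.
Proof.
split.
- move=> g g' e1 oR oR' gT g'T D D'.
  case: (splits_merge gT D) => [[e e' [[E1] _ ->]]|[]] //.
  by case: (splits_merge g'T D') => [[f f' [[E2] _ ->]]|[]] //; rewrite -E1 -E2.
- move=> g g' e2 oL oL' gT g'T D D'.
  case: (splits_merge gT D) => [[e eT [_ EP ->]]|[_ [<-] _ u]];
  case: (splits_merge g'T D') => [[f fT [_ EP' ->]]|[_ [<-] _ u']] //.
  + have [_ Ee2] := partner_some (esym EP); have [_ Ef2] := partner_some (esym EP').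
    congr merge_left; apply: (tiling_disj T1_tiling eT fT (hc := (lastc e, false))).
      exact/last_in/(tiling_valid T1_tiling eT).
    by rewrite -Ee2 Ef2; apply/last_in/(tiling_valid T1_tiling fT).
  + have [_ Ee2] := partner_some (esym EP).
    by move: u'; rewrite /unmatched => /hasP; case; exists e => //; rewrite Ee2.
  + have [_ Ef2] := partner_some (esym EP').
    by move: u; rewrite /unmatched => /hasP; case; exists f => //; rewrite Ef2.
Qed.

End Merge.

(* Half-lengths add up along a splitting, since a left piece that is
   followed by a right piece has even length. *)
Definition ohalf_length (o : option tile) : nat := if o is Some e then half_length e else 0.

Lemma splits_half_length K g oL oR : splits K g oL oR ->
  half_length g = (ohalf_length oL + ohalf_length oR)%N.
Proof.
case: oL oR => [e1|] [e2|] //; last 2 first.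
- by case=> _ _ ->; rewrite addn0.
- by case=> _ _ ->.
move=> D; have [_ h2 _ _ _] := splits_both D.
have [v1 _] := splits_pieceL D; have [_ m1] := valid_dyck v1.
by rewrite /half_length h2 size_cat divnDl // dvdn2 (hgt_even m1 (leqnn _)).
Qed.

Lemma tnorm_pmap (f : tile -> option tile) s :
  tnorm (pmap f s) = sumn [seq ohalf_length (f x) | x <- s].
Proof. by elim: s => //= x s IH; case: (f x) => [y|] //=; rewrite /tnorm /= -IH. Qed.

Lemma tnorm_cut K T : (forall g, g \in T -> splits K g (cutL K g) (cutR K g)) ->
  tnorm T = (tnorm (pmap (cutL K) T) + tnorm (pmap (cutR K) T))%N.
Proof.
rewrite !tnorm_pmap; elim: T => //= g T IH H.
rewrite /tnorm /= in IH *; rewrite IH => [|x xT]; last by apply: H; rewrite inE xT orbT.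
by rewrite (splits_half_length (H g (mem_head _ _))) addnACA.
Qed.

Lemma tnorm_transl v S : tnorm (map (transl v) S) = tnorm S.
Proof. by rewrite /tnorm -map_comp. Qed.

Lemma uniq_pmap (f : tile -> option tile) (s : seq tile) : uniq s ->
  {in s &, forall x y z, f x = Some z -> f y = Some z -> x = y} -> uniq (pmap f s).
Proof.
elim: s => //= x s IH /andP [xs us] Hinj.
have sub z : z \in s -> z \in x :: s by rewrite inE => ->; rewrite orbT.
have IH' := IH us (fun x' y' hx hy => Hinj x' y' (sub _ hx) (sub _ hy)).
case E: (f x) => [z|] //=; rewrite IH' andbT mem_pmap.
apply: contra xs => /mapP [y ys Ey].
by rewrite (Hinj x y (mem_head _ _) (sub _ ys) z E (esym Ey)).
Qed.

Definition left_tiles (K : int) (T : seq tile) : seq tile :=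
  csort (pmap (cutL K) T).
Definition right_tiles (K v : int) (T : seq tile) : seq tile :=
  csort (map (transl (- v)) (pmap (cutR K) T)).
Definition merged_tiles (v : int) (S1 S2 : seq tile) : seq tile :=
  csort (merge_tiles S1 (map (transl v) S2)).

Lemma transl_oppK_mem v (S : seq tile) : map (transl v) (map (transl (- v)) S) =i S.
Proof.
move=> x; rewrite -map_comp (@eq_map _ _ _ id) ?map_id // => e /=.
by have := translK (- v) e; rewrite opprK.
Qed.

Lemma mem_transl_csort v S x : (x \in map (transl v) (csort S)) = (x \in map (transl v) S).
Proof. by apply/mapP/mapP => [] [y yS ->]; exists y => //; move: yS; rewrite csort_mem. Qed.

Section Factorisation.
Variables (n1 n2 : nat) (lam1 lam2 mu1 mu2 : seq bool) (a i : nat).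
Hypothesis lam1_dyck : is_dyck n1 lam1.
Hypothesis lam2_dyck : is_dyck n2 lam2.
Hypothesis mu1_path : inL lam1 a i mu1.

Local Notation K := (size lam1).
Local Notation v := (n1%:Z).
Local Notation R := (hc_in (lam1 ++ lam2) (mu1 ++ mu2) a).

Lemma lam1_returns : hgt lam1 K = 0.
Proof. by have [_ _ e] := is_dyckP lam1_dyck; rewrite /hgt e subrr. Qed.

Lemma lam_returns : hgt (lam1 ++ lam2) K = 0.
Proof. by rewrite hgt_catl // lam1_returns. Qed.

Lemma lam_nonneg t : 0 <= hgt (lam1 ++ lam2) t.
Proof.
have [_ D1 _] := is_dyckP lam1_dyck; have [_ D2 _] := is_dyckP lam2_dyck.
case: (leqP t K) => h; first by rewrite hgt_catl //; have := D1 t; rewrite /hgt; lia.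
have -> : t = (K + (t - K))%N by lia.
by rewrite hgt_catr lam1_returns add0r; have := D2 (t - K)%N; rewrite /hgt; lia.
Qed.

Lemma K_double : K%:Z = 2 * v.
Proof. by have [s _ _] := is_dyckP lam1_dyck; rewrite s; lia. Qed.

Lemma K_even : ~~ odd K.
Proof. by have [s _ _] := is_dyckP lam1_dyck; rewrite s oddM. Qed.

Lemma region1E hc : hc_in lam1 mu1 a hc = leftR R K%:Z hc.
Proof. by have [sm _] := mu1_path; exact: (hc_in_catl lam2 mu2 a sm hc). Qed.

Lemma region2E hc : hc_in lam2 mu2 i (translh (- v) hc) = rightR R K%:Z hc.
Proof.
have [sm [_ me]] := mu1_path.
exact: (hc_in_catr lam2 mu2 sm lam1_returns me hc K_double).
Qed.

Lemma region2E_transl hc : hc_in lam2 mu2 i hc = rightR R K%:Z (translh v hc).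
Proof. by rewrite -region2E /translh /translc; case: hc => [[x y] b] /=; congr (hc_in _ _ _ (_, _, _)); lia. Qed.

Lemma tiling_splits T : tiling R T -> forall g, g \in T -> splits K%:Z g (cutL K%:Z g) (cutR K%:Z g).
Proof.
move=> HT g gT; apply: splits_cut => [|h1 h2]; first exact: tiling_valid HT gT.
apply: (crossing_at_return lam_returns lam_nonneg K_even HT gT); rewrite /cut_index; lia.
Qed.

Lemma cut_pieces T : tiling R T ->
  pieces K%:Z T (pmap (cutL K%:Z) T) (pmap (cutR K%:Z) T).
Proof. by move=> HT; apply/pieces_cut/tiling_splits. Qed.

Lemma left_tiles_tdtiling T : is_tdtiling (lam1 ++ lam2) a (mu1 ++ mu2) T ->
  is_tdtiling lam1 a mu1 (left_tiles K%:Z T).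
Proof.
case=> _ HT; split; first exact: canonical_csort.
apply: (tiling_ext (R := leftR R K%:Z)) => [hc|]; first by rewrite region1E.
apply: tiling_mem (tiling_left_pieces (cut_pieces HT) HT) => x.
by rewrite csort_mem.
Qed.

Lemma right_tiles_tdtiling T : is_tdtiling (lam1 ++ lam2) a (mu1 ++ mu2) T ->
  is_tdtiling lam2 i mu2 (right_tiles K%:Z v T).
Proof.
case=> _ HT; split; first exact: canonical_csort.
apply: tiling_mem (tiling_transl region2E (tiling_right_pieces (cut_pieces HT) HT)) => x.
by rewrite csort_mem.
Qed.

Lemma right_tiling_transl S2 : tiling (hc_in lam2 mu2 i) S2 ->
  tiling (rightR R K%:Z) (map (transl v) S2).
Proof. by apply: tiling_transl => hc; rewrite region2E_transl. Qed.

Lemma merged_tiles_tdtiling S1 S2 : is_tdtiling lam1 a mu1 S1 ->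
  is_tdtiling lam2 i mu2 S2 -> is_tdtiling (lam1 ++ lam2) a (mu1 ++ mu2) (merged_tiles v S1 S2).
Proof.
move=> [_ H1] [_ H2]; split; first exact: canonical_csort.
have H1' : tiling (leftR R K%:Z) S1 by apply: tiling_ext H1 => hc; rewrite region1E.
have H2' := right_tiling_transl H2.
apply: tiling_mem (tiling_of_pieces lam_returns (merge_pieces H1' H2')
  (merge_adjacent_glued H1' H2') (merge_pieces_inj H1' H2') H1' H2') => x.
by rewrite csort_mem.
Qed.

(* Merging the two halves of a cut tiling gives it back: the merge and the
   original tiling have the same pieces, glue adjacent pieces and are both
   injective on pieces. *)
Lemma merged_cut T : is_tdtiling (lam1 ++ lam2) a (mu1 ++ mu2) T ->
  merged_tiles v (left_tiles K%:Z T) (right_tiles K%:Z v T) = T.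
Proof.
case=> cT HT; have C := cut_pieces HT.
have E1 : pmap (cutL K%:Z) T =i left_tiles K%:Z T by move=> x; rewrite csort_mem.
have E2 : pmap (cutR K%:Z) T =i map (transl v) (right_tiles K%:Z v T).
  by move=> x; rewrite mem_transl_csort transl_oppK_mem.
have C' := pieces_mem (fun x => erefl) E1 E2 C.
have M' := adjacent_glued_mem (fun x => erefl) E1 E2 (tiling_adjacent_glued C HT).
have I := tiling_pieces_inj K%:Z HT.
have H1 := tiling_mem E1 (tiling_left_pieces C HT).
have H2 := tiling_mem E2 (tiling_right_pieces C HT).
have CM := merge_pieces H1 H2; have MM := merge_adjacent_glued H1 H2.
have IM := merge_pieces_inj H1 H2.
apply: canonical_eq; [exact: canonical_csort | exact: cT |] => x.
rewrite csort_mem; apply/idP/idP => hx.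
- exact: (pieces_sub CM C' MM M' IM I).
- exact: (pieces_sub C' CM M' MM I IM).
Qed.

(* Cutting a merged tiling gives back its two halves, since a set of tiles
   determines its pieces. *)
Lemma cut_merged S1 S2 : is_tdtiling lam1 a mu1 S1 -> is_tdtiling lam2 i mu2 S2 ->
  left_tiles K%:Z (merged_tiles v S1 S2) = S1 /\
  right_tiles K%:Z v (merged_tiles v S1 S2) = S2.
Proof.
move=> [c1 H1] [c2 H2].
have [_ HT] := merged_tiles_tdtiling (conj c1 H1) (conj c2 H2).
have Cc := cut_pieces HT.
have H1' : tiling (leftR R K%:Z) S1 by apply: tiling_ext H1 => hc; rewrite region1E.
have H2' := right_tiling_transl H2.
have CM := pieces_mem (fun x => esym (csort_mem _ x)) (fun x => erefl) (fun x => erefl)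
  (merge_pieces H1' H2').
have [I1 I2] := pieces_determined CM Cc; have [J1 J2] := pieces_determined Cc CM.
split; apply: canonical_eq => //; try exact: canonical_csort; move=> x.
  by rewrite csort_mem; apply/idP/idP; [exact: J1 | exact: I1].
have E : pmap (cutR K%:Z) (merged_tiles v S1 S2) =i map (transl v) S2.
  by move=> y; apply/idP/idP; [exact: J2 | exact: I2].
rewrite csort_mem (eq_mem_map (transl (- v)) E).
by have := transl_oppK_mem (- v) S2; rewrite opprK => ->.
Qed.

(* The norm is additive: cutting is injective on tiles and distributes the
   half-length of each tile between its two pieces. *)
Lemma tnorm_cut_tiles T : is_tdtiling (lam1 ++ lam2) a (mu1 ++ mu2) T ->
  tnorm T = (tnorm (left_tiles K%:Z T) + tnorm (right_tiles K%:Z v T))%N.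
Proof.
case=> cT HT; have [IL IR] := tiling_pieces_inj K%:Z HT.
have uT := canonical_uniq cT; have HD := tiling_splits HT.
have u1 : uniq (pmap (cutL K%:Z) T).
  apply: uniq_pmap uT _ => x y xT yT z Ex Ey.
  by move: (HD x xT) (HD y yT); rewrite Ex Ey; exact: IL xT yT.
have u2 : uniq (map (transl (- v)) (pmap (cutR K%:Z) T)).
  rewrite (map_inj_uniq (@transl_inj _)); apply: uniq_pmap uT _ => x y xT yT z Ex Ey.
  by move: (HD x xT) (HD y yT); rewrite Ex Ey; exact: IR xT yT.
by rewrite /left_tiles /right_tiles !tnorm_csort // tnorm_transl; exact: tnorm_cut HD.
Qed.

End Factorisation.

Lemma TD_eq lam a mu (X Y : TD lam a mu) : sval X = sval Y -> X = Y.
Proof. by apply: eq_sig_hprop => T p q; apply: proof_irrelevance. Qed.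

(* Lemma 3.6: cutting along the return point of lam = lam1 * lam2 is a
   norm-additive bijection TD(lam/mu) -> TD(lam1/mu1) x TD(lam2/mu2). *)
Theorem lemma3p6 (n1 n2 : nat) (lam1 lam2 : seq bool) (a b i : nat)
    (mu1 mu2 : seq bool) :
  is_dyck n1 lam1 -> is_dyck n2 lam2 ->
  inL lam1 a i mu1 -> inL lam2 i b mu2 ->
  exists phi : TD (lam1 ++ lam2) a (mu1 ++ mu2) -> TD lam1 a mu1 * TD lam2 i mu2,
    bijective phi /\
    forall T, tnorm (sval T) = (tnorm (sval (phi T).1) + tnorm (sval (phi T).2))%N.
Proof.
move=> D1 D2 L1 _.
pose phi (T : TD (lam1 ++ lam2) a (mu1 ++ mu2)) : TD lam1 a mu1 * TD lam2 i mu2 :=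
  (exist _ _ (left_tiles_tdtiling D1 D2 L1 (svalP T)),
   exist _ _ (right_tiles_tdtiling D1 D2 L1 (svalP T))).
pose psi (S : TD lam1 a mu1 * TD lam2 i mu2) : TD (lam1 ++ lam2) a (mu1 ++ mu2) :=
  exist _ _ (merged_tiles_tdtiling D1 L1 (svalP S.1) (svalP S.2)).
exists phi; split; last by move=> T; exact (tnorm_cut_tiles D1 D2 (svalP T)).
exists psi => [T | [S1 S2]]; first by apply: TD_eq; exact (merged_cut D1 D2 (svalP T)).
have [E1 E2] := cut_merged D1 D2 L1 (svalP S1) (svalP S2).
by congr pair; apply: TD_eq.
Qed.
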